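(* Let $f : M \to N$ be a continuous $o$-linear map between two torsionfree compact Hausdorff linear-topological $o$-modules $M$ and $N$, and let $f^d : N^d \to M^d$, $\ell \mapsto \ell \circ f$, be the induced map of $K$-Banach spaces. Then: (i) the restriction map $M^d \to \ker(f)^d$ induces an identification $\ker(f)^d = M^d/\overline{f^d(N^d)}$ (where $\ker(f)$ carries the subspace topology and $\overline{\,\cdot\,}$ denotes closure in $M^d$); (ii) the map dual to the projection $N \to \mathrm{coker}(f)_{\mathrm{cot}}$ identifies $[\mathrm{coker}(f)_{\mathrm{cot}}]^d$ with $\ker(f^d)$; (iii) $f$ is surjective if and only if $f^d$ is an isometry.
   Context: $K$ is a finite extension of $\mathbb{Q}_p$ with ring of integers $o$ and absolute value $|\cdot|$. A topological $o$-module is linear-topological if $0$ has a fundamental system of open neighbourhoods consisting of $o$-submodules. For a torsionfree compact Hausdorff linear-topological $o$-module $M$, $M^d := \mathrm{Hom}^{\mathrm{cont}}_o(M,K)$ is the $K$-Banach space of continuous $o$-linear maps $M\to K$ with norm $\|\ell\| := \max_{m\in M}|\ell(m)|$. For a Hausdorff linear-topological $o$-module $X$, $X_{\mathrm{cot}}$ denotes its unique largest quotient which is Hausdorff and torsionfree: if $(X_j)_{j\in J}$ is the family of all torsionfree Hausdorff quotient modules of $X$, then $X_{\mathrm{cot}}$ is the coimage of the natural map $X\to\prod_{j} X_j$. Here $\mathrm{coker}(f) = N/f(M)$ with the quotient topology. *)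

From HB Require Import structures.
From mathcomp Require Import all_boot all_order all_algebra.
From mathcomp Require Import boolp classical_sets reals.
Set Implicit Arguments. Unset Strict Implicit. Unset Printing Implicit Defensive.
Import Order.TTheory GRing.Theory Num.Theory.
Local Open Scope ring_scope.
Local Open Scope classical_set_scope.

(* The coefficient field K : a finite extension of Q_p.                     *)
Record is_padic_field (p : nat) (K : fieldType) (R : realType)
    (abs : K -> R) : Prop := {
  pf_prime : prime p;
  pf_ge0 : forall x, 0 <= abs x;
  pf_eq0 : forall x, abs x = 0 <-> x = 0;
  pf_mul : forall x y, abs (x * y) = abs x * abs y;
  pf_ultra : forall x y, abs (x + y) <= Num.max (abs x) (abs y);
  pf_char0 : forall n : nat, (n%:R : K) = 0 -> n = 0%N;
  pf_p : abs (p%:R : K) < 1;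
  pf_discrete : exists pi : K, 0 < abs pi < 1 /\
                  forall x, abs x < 1 -> abs x <= abs pi;
  pf_resfin : exists s : seq K, forall x, abs x <= 1 ->
                  exists2 y, y \in s & abs (x - y) < 1;
  pf_complete : forall u : nat -> K,
      (forall eps, 0 < eps -> exists n0 : nat, forall m n,
          (n0 <= m)%N -> (n0 <= n)%N -> abs (u m - u n) < eps) ->
      exists l, forall eps, 0 < eps -> exists n0 : nat, forall n,
          (n0 <= n)%N -> abs (u n - l) < eps }.

Record is_ring_of_integers (K : fieldType) (R : realType) (abs : K -> R)
    (o : comNzRingType) (iota : o -> K) : Prop := {
  roi_inj : injective iota;
  roi_im : forall x, abs x <= 1 <-> exists a, iota a = x }.

Record ltmod (o : Type) := LTMod {
  lt_car :> Type;
  lt_add : lt_car -> lt_car -> lt_car;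
  lt_zero : lt_car;
  lt_opp : lt_car -> lt_car;
  lt_scale : o -> lt_car -> lt_car;
  lt_open : set lt_car -> Prop }.
Arguments lt_zero {o} _.
Arguments lt_open {o} _ _.

Record is_omodule (o : comNzRingType) (M : ltmod o) : Prop := {
  om_addA : forall x y z : M, lt_add x (lt_add y z) = lt_add (lt_add x y) z;
  om_addC : forall x y : M, lt_add x y = lt_add y x;
  om_add0 : forall x : M, lt_add (lt_zero M) x = x;
  om_addN : forall x : M, lt_add (lt_opp x) x = lt_zero M;
  om_scaleA : forall (a b : o) (x : M), lt_scale a (lt_scale b x) = lt_scale (a * b) x;
  om_scale1 : forall x : M, lt_scale 1 x = x;
  om_scaleDr : forall (a : o) (x y : M),
      lt_scale a (lt_add x y) = lt_add (lt_scale a x) (lt_scale a y);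
  om_scaleDl : forall (a b : o) (x : M),
      lt_scale (a + b) x = lt_add (lt_scale a x) (lt_scale b x) }.

Record is_topology (o : Type) (M : ltmod o) : Prop := {
  top_setT : lt_open M setT;
  top_set0 : lt_open M set0;
  top_setI : forall U V, lt_open M U -> lt_open M V -> lt_open M (U `&` V);
  top_bigcup : forall F : set (set M), (forall U, F U -> lt_open M U) ->
      lt_open M [set x | exists2 U, F U & U x] }.

Definition is_submodule (o : Type) (M : ltmod o) (U : set M) : Prop :=
  [/\ U (lt_zero M),
      (forall x y : M, U x -> U y -> U (lt_add x y)) &
      (forall (a : o) (x : M), U x -> U (lt_scale a x))].

Record is_lintop_module (K : fieldType) (R : realType) (abs : K -> R)
    (o : comNzRingType) (iota : o -> K) (M : ltmod o) : Prop := {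
  ltm_mod : is_omodule M;
  ltm_top : is_topology M;
  ltm_add_cont : forall (x y : M) W, lt_open M W -> W (lt_add x y) ->
      exists U, exists V, [/\ lt_open M U, lt_open M V, U x, V y &
        forall u v : M, U u -> V v -> W (lt_add u v)];
  ltm_scale_cont : forall (a : o) (x : M) W, lt_open M W -> W (lt_scale a x) ->
      exists eps, 0 < eps /\ exists U, [/\ lt_open M U, U x &
        forall (b : o) (u : M), abs (iota b - iota a) < eps -> U u -> W (lt_scale b u)];
  ltm_linear : forall U, lt_open M U -> U (lt_zero M) ->
      exists V, [/\ lt_open M V, is_submodule V & V `<=` U] }.

Definition is_hausdorff (o : Type) (M : ltmod o) : Prop :=
  forall x y : M, x <> y -> exists U, exists V,
    [/\ lt_open M U, lt_open M V, U x, V y & U `&` V = set0].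

Definition is_compact (o : Type) (M : ltmod o) : Prop :=
  forall (I : Type) (F : I -> set M), (forall i, lt_open M (F i)) ->
    (forall x, exists i, F i x) ->
    exists (n : nat) (g : 'I_n -> I), forall x, exists j, F (g j) x.

Definition is_torsionfree (o : comNzRingType) (M : ltmod o) : Prop :=
  forall (a : o) (x : M), a <> 0 -> lt_scale a x = lt_zero M -> x = lt_zero M.

Record is_tf_compact_ltm (K : fieldType) (R : realType) (abs : K -> R)
    (o : comNzRingType) (iota : o -> K) (M : ltmod o) : Prop := {
  tcl_ltm : is_lintop_module abs iota M;
  tcl_hausdorff : is_hausdorff M;
  tcl_compact : is_compact M;
  tcl_tf : is_torsionfree M }.

Record is_cont_olinear (o : Type) (M N : ltmod o) (f : M -> N) : Prop := {
  col_add : forall x y : M, f (lt_add x y) = lt_add (f x) (f y);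
  col_scale : forall (a : o) (x : M), f (lt_scale a x) = lt_scale a (f x);
  col_cont : forall W, lt_open N W -> lt_open M (f @^-1` W) }.
Arguments is_cont_olinear {o} M N f.

Definition odual (K : fieldType) (R : realType) (abs : K -> R)
    (o : Type) (iota : o -> K) (M : ltmod o) (l : M -> K) : Prop :=
  [/\ (forall x y : M, l (lt_add x y) = l x + l y),
      (forall (a : o) (x : M), l (lt_scale a x) = iota a * l x) &
      (forall (x : M) eps, 0 < eps -> exists U, [/\ lt_open M U, U x &
          forall y : M, U y -> abs (l y - l x) < eps])].
Arguments odual {K R} abs {o} iota M l.

Definition dnorm (K : fieldType) (R : realType) (abs : K -> R)
    (o : Type) (M : ltmod o) (l : M -> K) : R :=
  sup [set abs (l m) | m in [set: M]].
Arguments dnorm {K R} abs {o} M l.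

Definition dclosure (K : fieldType) (R : realType) (abs : K -> R)
    (o : Type) (iota : o -> K) (M : ltmod o) (S : set (M -> K)) : set (M -> K) :=
  [set l | odual abs iota M l /\ forall eps, 0 < eps ->
      exists2 l', S l' & dnorm abs M (fun m => l m - l' m) < eps].
Arguments dclosure {K R} abs {o} iota M S.

Section SubMod.
Definition sub_add (o : Type) (M : ltmod o) (P : set M)
    (x y : {x : M | P x}) : {x : M | P x} :=
  match pselect (P (lt_add (proj1_sig x) (proj1_sig y))) with
  | left h => exist _ _ h | right _ => x end.
Definition sub_opp (o : Type) (M : ltmod o) (P : set M)
    (x : {x : M | P x}) : {x : M | P x} :=
  match pselect (P (lt_opp (proj1_sig x))) with
  | left h => exist _ _ h | right _ => x end.
Definition sub_scale (o : Type) (M : ltmod o) (P : set M)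
    (a : o) (x : {x : M | P x}) : {x : M | P x} :=
  match pselect (P (lt_scale a (proj1_sig x))) with
  | left h => exist _ _ h | right _ => x end.
End SubMod.

Definition subltmod (o : Type) (M : ltmod o) (P : set M)
    (h0 : P (lt_zero M)) : ltmod o :=
  @LTMod o {x : M | P x} (@sub_add o M P) (exist _ _ h0) (@sub_opp o M P)
    (@sub_scale o M P)
    (fun W => exists2 U, lt_open M U & W = [set x | U (proj1_sig x)]).

Lemma additive_zero (o : comNzRingType) (M N : ltmod o) (f : M -> N) :
  is_omodule M -> is_omodule N -> is_cont_olinear M N f ->
  f (lt_zero M) = lt_zero N.
Proof.
move=> hM hN hf.
have e : f (lt_zero M) = lt_add (f (lt_zero M)) (f (lt_zero M)).
  by rewrite -(col_add hf) (om_add0 hM).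
rewrite -[LHS](om_add0 hN) -(om_addN hN (f (lt_zero M))).
by rewrite -(om_addA hN) -e.
Qed.

Definition kerP (o : Type) (M N : ltmod o) (f : M -> N) : set M :=
  [set x | f x = lt_zero N].

Definition kerltmod (o : comNzRingType) (M N : ltmod o) (f : M -> N)
    (hM : is_omodule M) (hN : is_omodule N) (hf : is_cont_olinear M N f) :
    ltmod o :=
  @subltmod o M (kerP f) (additive_zero hM hN hf).

Definition coset (o : Type) (M : ltmod o) (V : set M) (x : M) : set M :=
  [set y | V (lt_add y (lt_opp x))].

Definition quot_car (o : Type) (M : ltmod o) (V : set M) : Type :=
  {S : set M | exists x, S = coset V x}.

Definition qproj (o : Type) (M : ltmod o) (V : set M) (x : M) : quot_car V :=
  exist _ (coset V x) (ex_intro _ x erefl).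

Definition qrepr (o : Type) (M : ltmod o) (V : set M) (S : quot_car V) : M :=
  projT1 (cid (proj2_sig S)).

Definition quot (o : Type) (M : ltmod o) (V : set M) : ltmod o :=
  @LTMod o (quot_car V)
    (fun S T => qproj V (lt_add (qrepr S) (qrepr T)))
    (qproj V (lt_zero M))
    (fun S => qproj V (lt_opp (qrepr S)))
    (fun a S => qproj V (lt_scale a (qrepr S)))
    (fun W => lt_open M (qproj V @^-1` W)).

Definition qmap (o : Type) (M : ltmod o) (V : set M) : M -> quot V :=
  @qproj o M V.

Definition coker (o : Type) (M N : ltmod o) (f : M -> N) : ltmod o :=
  quot [set n | exists m, f m = n].

(* X_cot : coimage of X -> prod_j X_j over all torsionfree Hausdorff
   quotients X_j = X / W of X, i.e. X / (intersection of all such W). *)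
Definition cot_sub (o : comNzRingType) (X : ltmod o) : set X :=
  [set x | forall W : set X, is_submodule W ->
     is_hausdorff (quot W) -> is_torsionfree (quot W) -> W x].
Arguments cot_sub {o} X.

Definition cot (o : comNzRingType) (X : ltmod o) : ltmod o := quot (cot_sub X).

Definition coker_cot_proj (o : comNzRingType) (M N : ltmod o) (f : M -> N)
    (n : N) : cot (coker f) :=
  qmap (cot_sub (coker f)) (qmap [set n | exists m, f m = n] n).

From HB Require Import structures.
From mathcomp Require Import all_boot all_order all_algebra.
From mathcomp Require Import boolp classical_sets reals.
From mathcomp Require Import lra ring.
Import Order.TTheory GRing.Theory Num.Theory.
Local Open Scope ring_scope.
Local Open Scope classical_set_scope.
Set Implicit Arguments. Unset Strict Implicit. Unset Printing Implicit Defensive.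

(* Everything rests on characters mod [o]: maps [c : M -> K] that are additive
   and [o]-linear up to errors in [o] and [o]-valued on an open submodule.  Such
   a character on a submodule extends to all of [M]: by compactness finitely
   many cosets of the open submodule cover [M], and the coset representatives
   are adjoined one at a time, discreteness of [|.|] fixing the value on each
   new generator.  Dividing characters by a uniformizer [pi] and taking
   [pi]-adic limits turns them into continuous functionals.  This extends
   functionals from the saturated closed submodule [ker f], and approximates a
   functional vanishing on [ker f] by functionals [l0 \o f], which gives (i).
   A point outside the compact image [f(M)] is separated from it by a
   functional bounded by 1 on [f(M)] but not at the point, which gives the hard
   direction of (iii).  For (ii), the kernel of a functional vanishing on
   [f(M)] defines a torsionfree Hausdorff quotient of [coker f], so the
   functional factors through [coker(f)_cot]. *)

(* The carrier of an [o]-module, with its MathComp [lmodType] structure: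
   [lmodE] moves a goal there, where ring lemmas and tactics apply. *)
Definition lmod_of (o : comNzRingType) (M : ltmod o) (hM : is_omodule M) := lt_car M.
HB.instance Definition _ (o : comNzRingType) (M : ltmod o) (hM : is_omodule M) :=
  gen_eqMixin (@lmod_of o M hM).
HB.instance Definition _ (o : comNzRingType) (M : ltmod o) (hM : is_omodule M) :=
  gen_choiceMixin (@lmod_of o M hM).
HB.instance Definition _ (o : comNzRingType) (M : ltmod o) (hM : is_omodule M) :=
  GRing.isZmodule.Build (@lmod_of o M hM) (om_addA hM) (om_addC hM) (om_add0 hM) (om_addN hM).
HB.instance Definition _ (o : comNzRingType) (M : ltmod o) (hM : is_omodule M) :=
  GRing.Zmodule_isLmodule.Build o (@lmod_of o M hM) (om_scaleA hM) (om_scale1 hM)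
    (om_scaleDr hM) (fun v a b => om_scaleDl hM a b v).

Section LmodOf.
Variables (o : comNzRingType) (M : ltmod o) (hM : is_omodule M).
Notation Mz := (lmod_of hM).
Lemma addE (x y : M) : lt_add x y = (x : Mz) + y. Proof. by []. Qed.
Lemma scaleE a (x : M) : lt_scale a x = a *: (x : Mz). Proof. by []. Qed.
Lemma oppE (x : M) : lt_opp x = - (x : Mz). Proof. by []. Qed.
Lemma zeroE : lt_zero M = (0 : Mz). Proof. by []. Qed.
End LmodOf.

Ltac lmodE h := rewrite ?(addE h, scaleE h, oppE h, zeroE h).

Lemma submodI (o : Type) (M : ltmod o) (U V : set M) :
  is_submodule U -> is_submodule V -> is_submodule (U `&` V).
Proof.
move=> [U0 UD UZ] [V0 VD VZ]; split => //.
- by move=> x y [? ?] [? ?]; split; [apply: UD | apply: VD].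
- by move=> a x [? ?]; split; [apply: UZ | apply: VZ].
Qed.

Section Submodule.
Variables (o : comNzRingType) (M : ltmod o) (hM : is_omodule M).

Lemma submod0 (U : set M) : is_submodule U -> U (lt_zero M).
Proof. by case. Qed.

Lemma submodD (U : set M) x y : is_submodule U -> U x -> U y -> U (lt_add x y).
Proof. by move=> [_ h _]; apply: h. Qed.

Lemma submodZ (U : set M) a x : is_submodule U -> U x -> U (lt_scale a x).
Proof. by move=> [_ _ h]; apply: h. Qed.

Lemma submodN (U : set M) x : is_submodule U -> U x -> U (lt_opp x).
Proof.
move=> sU Ux; have -> : lt_opp x = lt_scale (-1) x by lmodE hM; rewrite scaleN1r.
exact: submodZ.
Qed.

Lemma submodB (U : set M) x y : is_submodule U -> U x -> U y -> U (lt_add x (lt_opp y)).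
Proof. by move=> sU Ux Uy; apply: submodD => //; apply: submodN. Qed.

Lemma submodT : is_submodule [set: M]. Proof. by []. Qed.

Lemma submod_zero : is_submodule [set lt_zero M].
Proof.
split => //.
- by move=> x y -> ->; lmodE hM; rewrite addr0.
- by move=> a x ->; lmodE hM; rewrite scaler0.
Qed.

Definition sum_set (A U : set M) : set M :=
  [set z | exists au : M * M, [/\ A au.1, U au.2 & z = lt_add au.1 au.2]].

Lemma submod_sum (A U : set M) :
  is_submodule A -> is_submodule U -> is_submodule (sum_set A U).
Proof.
move=> sA sU; split.
- exists (lt_zero M, lt_zero M); split; try exact: submod0.
  by lmodE hM; rewrite addr0.
- move=> x y [[a1 u1] /= [A1 U1 ->]] [[a2 u2] /= [A2 U2 ->]].
  exists (lt_add a1 a2, lt_add u1 u2); split; try exact: submodD.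
  by lmodE hM; rewrite addrACA.
- move=> s x [[a u] /= [Aa Uu ->]].
  exists (lt_scale s a, lt_scale s u); split; try exact: submodZ.
  by lmodE hM; rewrite scalerDr.
Qed.

Lemma sum_set_l (A U : set M) : is_submodule U -> A `<=` sum_set A U.
Proof.
move=> sU a Aa; exists (a, lt_zero M); split => //; first exact: submod0.
by lmodE hM; rewrite addr0.
Qed.

Lemma sum_set_r (A U : set M) : is_submodule A -> U `<=` sum_set A U.
Proof.
move=> sA u Uu; exists (lt_zero M, u); split => //; first exact: submod0.
by lmodE hM; rewrite add0r.
Qed.
End Submodule.
Arguments submodT {o M}.

Section Quotient.
Variables (o : comNzRingType) (X : ltmod o) (hX : is_omodule X) (V : set X)
  (sV : is_submodule V).

Lemma qprojP a b : qproj V a = qproj V b <-> V (lt_add a (lt_opp b)).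
Proof.
split.
- move=> e; have : coset V a a by rewrite /coset /=; lmodE hX; rewrite subrr; case: sV.
  by move: (f_equal (@proj1_sig _ _) e) => /= ->.
- move=> h; apply: eq_exist; apply/seteqP; split => y; rewrite /coset /= => hy.
  + have -> : lt_add y (lt_opp b) = lt_add (lt_add y (lt_opp a)) (lt_add a (lt_opp b)).
      by lmodE hX; rewrite addrA subrK.
    exact: submodD.
  + have -> : lt_add y (lt_opp a) = lt_add (lt_add y (lt_opp b)) (lt_opp (lt_add a (lt_opp b))).
      by lmodE hX; rewrite opprB addrA subrK.
    exact: submodB.
Qed.

Lemma qprojK (S : quot_car V) : qproj V (qrepr S) = S.
Proof. by case: S => S0 hS; rewrite /qrepr /=; case: (cid hS) => x /= ex; apply: eq_exist. Qed.

Lemma qreprP x : V (lt_add (qrepr (qproj V x)) (lt_opp x)).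
Proof. by apply/qprojP; rewrite qprojK. Qed.

Lemma qprojD x y : lt_add (l := quot V) (qproj V x) (qproj V y) = qproj V (lt_add x y).
Proof.
apply/qprojP.
have -> : lt_add (lt_add (qrepr (qproj V x)) (qrepr (qproj V y))) (lt_opp (lt_add x y)) =
  lt_add (lt_add (qrepr (qproj V x)) (lt_opp x)) (lt_add (qrepr (qproj V y)) (lt_opp y)).
  by lmodE hX; rewrite opprD addrACA.
by apply: submodD => //; apply: qreprP.
Qed.

Lemma qprojZ a x : lt_scale (l := quot V) a (qproj V x) = qproj V (lt_scale a x).
Proof.
apply/qprojP.
have -> : lt_add (lt_scale a (qrepr (qproj V x))) (lt_opp (lt_scale a x)) =
  lt_scale a (lt_add (qrepr (qproj V x)) (lt_opp x)).
  by lmodE hX; rewrite scalerBr.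
by apply: submodZ => //; apply: qreprP.
Qed.

Lemma qprojN x : lt_opp (l := quot V) (qproj V x) = qproj V (lt_opp x).
Proof.
apply/qprojP.
have -> : lt_add (lt_opp (qrepr (qproj V x))) (lt_opp (lt_opp x)) =
  lt_opp (lt_add (qrepr (qproj V x)) (lt_opp x)).
  by lmodE hX; rewrite opprD.
by apply: submodN => //; apply: qreprP.
Qed.

Lemma qproj0 : lt_zero (quot V) = qproj V (lt_zero X). Proof. by []. Qed.

Lemma quot_omodule : is_omodule (quot V).
Proof.
split.
- by move=> S T U; rewrite -(qprojK S) -(qprojK T) -(qprojK U) !qprojD (om_addA hX).
- by move=> S T; rewrite -(qprojK S) -(qprojK T) !qprojD (om_addC hX).
- by move=> S; rewrite -(qprojK S) qproj0 qprojD (om_add0 hX).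
- by move=> S; rewrite -(qprojK S) qprojN qprojD qproj0 (om_addN hX).
- by move=> a b S; rewrite -(qprojK S) !qprojZ (om_scaleA hX).
- by move=> S; rewrite -(qprojK S) qprojZ (om_scale1 hX).
- by move=> a S T; rewrite -(qprojK S) -(qprojK T) qprojD !qprojZ qprojD (om_scaleDr hX).
- by move=> a b S; rewrite -(qprojK S) !qprojZ qprojD (om_scaleDl hX).
Qed.
End Quotient.

Lemma submod_cot_sub (o : comNzRingType) (X : ltmod o) : is_submodule (cot_sub X).
Proof.
split=> [W sW _ _|x y hx hy W sW hH htf|a x hx W sW hH htf]; first exact: submod0.
  exact: (submodD sW (hx W sW hH htf) (hy W sW hH htf)).
exact: (submodZ a sW (hx W sW hH htf)).
Qed.

Definition open_submod (o : Type) (M : ltmod o) (U : set M) :=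
  lt_open M U /\ is_submodule U.
Arguments open_submod {o} M U.

Section Topology.
Variables (o : Type) (M : ltmod o) (hT : is_topology M).

Lemma open_nbhd (S : set M) :
  (forall x, S x -> exists U, [/\ lt_open M U, U x & U `<=` S]) -> lt_open M S.
Proof.
move=> h.
have -> : S = [set x | exists2 U, [set U | lt_open M U /\ U `<=` S] U & U x].
  apply/seteqP; split => x; last by move=> [U [_ sU] Ux]; apply: sU.
  by move=> Sx; have [U [oU Ux sU]] := h x Sx; exists U.
by apply: (top_bigcup hT) => U [].
Qed.

Lemma open_setC1 a : is_hausdorff M -> lt_open M (~` [set a]).
Proof.
move=> hH; apply: open_nbhd => x /= nx.
have [P [Q [oP oQ Px Qa PQ]]] := hH _ _ nx.
exists P; split => // y Py /= ya.
have : (P `&` Q) a by split; rewrite // -ya.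
by rewrite PQ.
Qed.

Lemma open_submodT : open_submod M [set: M].
Proof. by split; [exact: (top_setT hT) | split]. Qed.

Lemma open_submod_bigI n (U : 'I_n -> set M) : (forall i, open_submod M (U i)) ->
  open_submod M [set z | forall i, U i z].
Proof.
elim: n U => [|n ih] U hU.
  have -> : [set z | forall i : 'I_0, U i z] = [set: M] by apply/seteqP; split => // z _ [].
  exact: open_submodT.
have -> : [set z | forall i, U i z] = U ord0 `&` [set z | forall i : 'I_n, U (lift ord0 i) z].
  apply/seteqP; split => z; first by move=> h; split => // i; apply: h.
  by move=> [h0 h1] i; case: (unliftP ord0 i) => [j ->|->].
have [oU0 sU0] := hU ord0; have [oI sI] := ih _ (fun i => hU (lift ord0 i)).
by split; [exact: (top_setI hT) | exact: submodI].
Qed.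
End Topology.

Lemma bernoulli_ineq (F : realDomainType) (h : F) n : 0 <= h -> 1 + n%:R * h <= (1 + h) ^+ n.
Proof.
move=> h0; elim: n => [|n ih]; first by rewrite mul0r addr0 expr0.
rewrite exprS -natr1.
have e1 : 0 <= (1 + h) ^+ n by rewrite exprn_ge0 //; lra.
have e2 : 0 <= n%:R * h by rewrite mulr_ge0 // ler0n.
nra.
Qed.

Section PAdic.
Variables (p : nat) (K : fieldType) (R : realType) (abs : K -> R)
  (hK : is_padic_field p abs)
  (o : comNzRingType) (iota : {rmorphism o -> K})
  (ho : is_ring_of_integers abs iota).

(** * The valued field [K] *)

Lemma abs_ge0 x : 0 <= abs x. Proof. exact: (pf_ge0 hK x). Qed.
Lemma abs0 : abs 0 = 0. Proof. by apply/(pf_eq0 hK). Qed.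
Lemma abs_eq0 x : abs x = 0 -> x = 0. Proof. by move/(pf_eq0 hK). Qed.
Lemma absM x y : abs (x * y) = abs x * abs y. Proof. exact: (pf_mul hK x y). Qed.

Lemma abs1 : abs 1 = 1.
Proof.
have h := absM 1 1; rewrite mulr1 in h.
have h0 : abs 1 != 0 by apply/eqP => /abs_eq0 /eqP; rewrite oner_eq0.
by apply: (mulfI h0); rewrite -h mulr1.
Qed.

Lemma absN x : abs (- x) = abs x.
Proof.
have h : abs (-1) * abs (-1) = 1 by rewrite -absM mulrNN mulr1 abs1.
have h1 : abs (-1) = 1.
  have g := abs_ge0 (-1).
  have : (abs (-1) - 1) * (abs (-1) + 1) = 0 by rewrite mulrDr mulrBl h; lra.
  move/eqP; rewrite mulf_eq0 => /orP [/eqP|/eqP]; lra.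
by rewrite -mulN1r absM h1 mul1r.
Qed.

Lemma abs_distC x y : abs (x - y) = abs (y - x).
Proof. by rewrite -absN opprB. Qed.

Lemma absX x n : abs (x ^+ n) = abs x ^+ n.
Proof. by elim: n => [|n ih]; rewrite ?expr0 ?abs1 // !exprS absM ih. Qed.

Lemma absV x : abs (x^-1) = (abs x)^-1.
Proof.
have [->|nx] := eqVneq x 0; first by rewrite invr0 abs0 invr0.
have h : abs x * abs x^-1 = 1 by rewrite -absM mulfV // abs1.
have hx : abs x != 0 by apply/eqP => /abs_eq0 /eqP; rewrite (negbTE nx).
by rewrite -[abs x^-1]mul1r -(mulVf hx) -mulrA h mulr1.
Qed.

Lemma abs_gt0 x : x != 0 -> 0 < abs x.
Proof.
by move=> nx; rewrite lt_neqAle abs_ge0 andbT eq_sym; apply: contra nx => /eqP/abs_eq0 ->.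
Qed.

Lemma abs_ultra_le x y e : abs x <= e -> abs y <= e -> abs (x + y) <= e.
Proof. by move=> hx hy; apply: le_trans (pf_ultra hK x y) _; rewrite ge_max hx hy. Qed.

Lemma abs_ultra_lt x y e : abs x < e -> abs y < e -> abs (x + y) < e.
Proof. by move=> hx hy; apply: le_lt_trans (pf_ultra hK x y) _; rewrite gt_max hx hy. Qed.

Lemma abs_ultraB_le x y e : abs x <= e -> abs y <= e -> abs (x - y) <= e.
Proof. by move=> hx hy; apply: abs_ultra_le; rewrite ?absN. Qed.

Lemma abs_mul_le x y r : abs x <= r -> abs y <= 1 -> abs (x * y) <= r.
Proof. by move=> hx hy; rewrite absM -[r]mulr1 ler_pM // abs_ge0. Qed.

Definition unif : K := projT1 (cid (pf_discrete hK)).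

Lemma unif_spec : (0 < abs unif < 1) /\ forall x, abs x < 1 -> abs x <= abs unif.
Proof. exact: (projT2 (cid (pf_discrete hK))). Qed.

Lemma abs_unif_gt0 : 0 < abs unif. Proof. by case: unif_spec => /andP[]. Qed.
Lemma abs_unif_lt1 : abs unif < 1. Proof. by case: unif_spec => /andP[]. Qed.
Lemma abs_le_unif x : abs x < 1 -> abs x <= abs unif. Proof. by case: unif_spec => _; apply. Qed.

Lemma unifX_neq0 n : unif ^+ n != 0.
Proof. by rewrite expf_neq0 //; apply/eqP => h; have := abs_unif_gt0; rewrite h abs0 ltxx. Qed.

Lemma abs_unifX_gt0 n : 0 < abs unif ^+ n. Proof. by rewrite exprn_gt0 // abs_unif_gt0. Qed.

Lemma abs_unifX_le1 n : abs unif ^+ n <= 1.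
Proof. by rewrite exprn_ile1 // ?abs_ge0 // ltW // abs_unif_lt1. Qed.

Lemma abs_unifX_decr m n : (m <= n)%N -> abs unif ^+ n <= abs unif ^+ m.
Proof.
move=> h; rewrite -(subnK h) exprD ler_piMl // ?abs_unifX_le1 //.
exact/ltW/abs_unifX_gt0.
Qed.

Lemma abs_unifXM_le k x : abs x <= 1 -> abs (unif ^+ k * x) <= abs unif ^+ k.
Proof. by move=> hx; apply: abs_mul_le => //; rewrite absX. Qed.

(* Bernoulli's inequality for [h = |pi|^-1 - 1] makes [|pi|^-n] unbounded. *)
Lemma exists_abs_unifX_lt eps : 0 < eps -> exists k, abs unif ^+ k < eps.
Proof.
move=> e0; set r := abs unif; have r0 := abs_unif_gt0; have r1 := abs_unif_lt1.
have h0 : 0 < r^-1 - 1 by rewrite subr_gt0 invf_gt1.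
have b0 : 0 <= eps^-1 / (r^-1 - 1) by rewrite divr_ge0 // ltW // invr_gt0.
exists (Num.bound (eps^-1 / (r^-1 - 1))).
have hb := archi_boundP b0; set n := Num.bound _ in hb *.
have hbn := bernoulli_ineq n (ltW h0).
rewrite [1 + (_ - 1)]addrC subrK exprVn in hbn.
have hn : eps^-1 < n%:R * (r^-1 - 1) by rewrite -ltr_pdivrMr.
have : eps^-1 < (r ^+ n)^-1 by apply: lt_le_trans hbn; lra.
by rewrite ltf_pV2 // ?posrE // ?exprn_gt0 // invr_gt0.
Qed.

Lemma abs_le_unifX_eq0 x : (forall k, abs x <= abs unif ^+ k) -> x = 0.
Proof.
move=> h; apply: abs_eq0; apply/eqP; rewrite eq_le abs_ge0 andbT leNgt; apply/negP => hx.
by have [k hk] := exists_abs_unifX_lt hx; have := h k; rewrite leNgt hk.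
Qed.

Lemma eq_of_abs_le_unifX x y : (forall k, abs (x - y) <= abs unif ^+ k) -> x = y.
Proof. by move/abs_le_unifX_eq0/eqP; rewrite subr_eq0 => /eqP. Qed.

Lemma unif_adic_limit (u : nat -> K) :
  (forall k, abs (u k.+1 - u k) <= abs unif ^+ k) ->
  exists l, forall k, abs (l - u k) <= abs unif ^+ k.
Proof.
move=> hu.
have cauchy k m : (k <= m)%N -> abs (u m - u k) <= abs unif ^+ k.
  move=> /subnK <-; elim: (m - k)%N => [|d ih]; first by rewrite subrr abs0 ltW ?abs_unifX_gt0.
  rewrite addSn -[u (d + k).+1](subrK (u (d + k)%N)) -addrA; apply: abs_ultra_le => //.
  by apply: le_trans (hu _) _; apply: abs_unifX_decr; rewrite leq_addl.
have [l hl] : exists l, forall eps, 0 < eps -> exists n0 : nat, forall n,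
    (n0 <= n)%N -> abs (u n - l) < eps.
  apply: (pf_complete hK) => eps e0; have [k hk] := exists_abs_unifX_lt e0.
  exists k => m n km kn.
  have -> : u m - u n = (u m - u k) - (u n - u k) by rewrite opprB addrA subrK.
  by apply: le_lt_trans hk; apply: abs_ultraB_le; apply: cauchy.
exists l => k; have [n0 hn0] := hl _ (abs_unifX_gt0 k).
have h1 := hn0 (maxn n0 k) (leq_maxl _ _).
have -> : l - u k = (u (maxn n0 k) - u k) - (u (maxn n0 k) - l) by ring.
by apply: abs_ultraB_le; [apply: cauchy; exact: leq_maxr | exact: ltW].
Qed.

Lemma iota_inj : injective iota. Proof. exact: roi_inj ho. Qed.
Lemma abs_iota_le1 a : abs (iota a) <= 1. Proof. by apply/(roi_im ho); exists a. Qed.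
Lemma iota_onto x : abs x <= 1 -> exists a, iota a = x. Proof. by move/(roi_im ho x). Qed.

Definition ounif : o := projT1 (cid (iota_onto (ltW abs_unif_lt1))).

Lemma iota_ounif : iota ounif = unif.
Proof. exact: (projT2 (cid (iota_onto (ltW abs_unif_lt1)))). Qed.

Lemma iota_ounifX n : iota (ounif ^+ n) = unif ^+ n.
Proof. by rewrite rmorphXn iota_ounif. Qed.

Lemma ounif_neq0 : ounif != 0.
Proof. by apply/eqP => h; have := unifX_neq0 1; rewrite expr1 -iota_ounif h rmorph0 eqxx. Qed.

Definition eqo (x y : K) := abs (x - y) <= 1.

Lemma eqo_refl x : eqo x x. Proof. by rewrite /eqo subrr abs0 ler01. Qed.
Lemma eqo_eq x y : x = y -> eqo x y. Proof. by move->; apply: eqo_refl. Qed.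
Lemma eqo_sym x y : eqo x y -> eqo y x. Proof. by rewrite /eqo abs_distC. Qed.
Lemma eqo_trans x y z : eqo x y -> eqo y z -> eqo x z.
Proof. by move=> h1 h2; have := abs_ultra_le h1 h2; rewrite addrA subrK. Qed.
Lemma eqoD x y x' y' : eqo x y -> eqo x' y' -> eqo (x + x') (y + y').
Proof. by move=> h1 h2; rewrite /eqo opprD addrACA; apply: abs_ultra_le. Qed.
Lemma eqoN x y : eqo x y -> eqo (- x) (- y).
Proof. by rewrite /eqo -opprD absN. Qed.
Lemma eqoB x y x' y' : eqo x y -> eqo x' y' -> eqo (x - x') (y - y').
Proof. by move=> h1 h2; apply: eqoD => //; apply: eqoN. Qed.
Lemma eqoMl s x y : abs s <= 1 -> eqo x y -> eqo (s * x) (s * y).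
Proof. by move=> hs h; rewrite /eqo -mulrBr mulrC abs_mul_le. Qed.
Lemma eqo0 x : eqo x 0 <-> abs x <= 1. Proof. by rewrite /eqo subr0. Qed.

Lemma eqo_abs_gt1 x y : eqo x y -> 1 < abs y -> 1 < abs x.
Proof.
move=> hxy hy; rewrite ltNge; apply/negP => hx; move: hy; rewrite ltNge => /negP; apply.
by rewrite -[y](subrK x) -opprB; apply: abs_ultra_le; rewrite ?absN.
Qed.

Section OdualAlgebra.
Variables (M : ltmod o) (hM : is_omodule M).

Lemma odual0 l : odual abs iota M l -> l (lt_zero M) = 0.
Proof.
move=> [ha _ _]; apply: (@addrI _ (l (lt_zero M))).
by rewrite addr0 -ha; congr l; lmodE hM; rewrite addr0.
Qed.

Lemma odualB l x y : odual abs iota M l -> l (lt_add x (lt_opp y)) = l x - l y.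
Proof.
by move=> [ha _ _]; apply/eqP; rewrite eq_sym subr_eq -ha; lmodE hM; rewrite subrK.
Qed.
End OdualAlgebra.

(** * Linear-topological modules and their duals *)

Section LinTopModule.
Variables (M : ltmod o) (hL : is_lintop_module abs iota M) (hc : is_compact M).
Let hM := ltm_mod hL.
Let hT := ltm_top hL.
Local Notation Mz := (lmod_of hM).

Lemma open_transl (O : set M) x : lt_open M O -> lt_open M [set u | O (lt_add x u)].
Proof.
move=> oO; apply: (open_nbhd hT) => u Ou.
have [P [Q [oP oQ Px Qu h]]] := ltm_add_cont hL oO Ou.
by exists Q; split => // v Qv; apply: h.
Qed.

Lemma open_submod_nbhd (O : set M) x : lt_open M O -> O x ->
  exists U, open_submod M U /\ forall u, U u -> O (lt_add x u).
Proof.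
move=> oO Ox.
have h0 : [set u | O (lt_add x u)] (lt_zero M) by rewrite /=; lmodE hM; rewrite addr0.
have [V [oV sV VU]] := ltm_linear hL (open_transl x oO) h0.
by exists V; split => // u /VU.
Qed.

Lemma open_coset (U : set M) x : lt_open M U -> lt_open M [set y | U (lt_add y (lt_opp x))].
Proof.
move=> oU; apply: (open_nbhd hT) => y Uy.
have [P [Q [oP oQ Py Qx h]]] := ltm_add_cont hL oU Uy.
by exists P; split => // z Pz; exact: h.
Qed.

Lemma open_scale_preimage (O : set M) a : lt_open M O -> lt_open M [set x | O (lt_scale a x)].
Proof.
move=> oO; apply: (open_nbhd hT) => x Ox.
have [eps [e0 [W [oW Wx hW]]]] := ltm_scale_cont hL oO Ox.
by exists W; split => // y Wy; apply: hW; rewrite // subrr abs0.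
Qed.

Lemma coset_self (U : set M) x : is_submodule U -> U (lt_add x (lt_opp x)).
Proof. by move=> sU; lmodE hM; rewrite subrr; apply: submod0 sU. Qed.

Lemma open_of_add_stable (S U : set M) : open_submod M U ->
  (forall s u, S s -> U u -> S (lt_add s u)) -> lt_open M S.
Proof.
move=> [oU sU] hS; apply: (open_nbhd hT) => s Ss.
exists [set y | U (lt_add y (lt_opp s))]; split; [exact: open_coset | exact: coset_self |].
by move=> y Uy; have := hS s _ Ss Uy; lmodE hM; rewrite addrC subrK.
Qed.

Lemma ounifX_scale_eventually (U : set M) x : open_submod M U ->
  exists k, forall n, (k <= n)%N -> U (lt_scale (ounif ^+ n) x).
Proof.
move=> [oU sU].
have U0 : U (lt_scale 0 x) by lmodE hM; rewrite scale0r; exact: submod0.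
have [eps [e0 [V [oV Vx h]]]] := ltm_scale_cont hL oU U0.
have [k hk] := exists_abs_unifX_lt e0.
exists k => n kn; apply: h => //.
by rewrite rmorph0 subr0 iota_ounifX absX; exact: le_lt_trans (abs_unifX_decr kn) hk.
Qed.

Lemma compact_cover (F : M -> set M) :
  (forall x, lt_open M (F x)) -> (forall x, F x x) ->
  exists n (g : 'I_n -> M), forall z, exists j, F (g j) z.
Proof. by move=> hF hx; apply: hc => // x; exists x. Qed.

Lemma compact_tube (N : ltmod o) (hN : is_topology N) (S : set M) (Q : M -> set N -> Prop) :
  lt_open M S -> (forall y U U', Q y U -> U' `<=` U -> Q y U') ->
  (forall x, ~ S x -> exists W U,
     [/\ lt_open M W, W x, open_submod N U & forall y, W y -> Q y U]) ->
  exists U, open_submod N U /\ forall y, ~ S y -> Q y U.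
Proof.
move=> oS hQ h.
have h' x : exists WU : set M * set N,
   [/\ lt_open M WU.1, WU.1 x, open_submod N WU.2 & forall y, WU.1 y -> S y \/ Q y WU.2].
  case: (pselect (S x)) => Sx.
    by exists (S, [set: N]); split => //; [exact: open_submodT | left].
  have [W [U [oW Wx oU hW]]] := h x Sx.
  by exists (W, U); split => // y Wy; right; apply: hW.
have [F hF] := choice h'.
have hF1 x : lt_open M (F x).1 by case: (hF x).
have hF2 x : (F x).1 x by case: (hF x).
have [n [g hg]] := compact_cover hF1 hF2.
exists [set z | forall j, (F (g j)).2 z]; split.
  by apply: open_submod_bigI => // j; case: (hF (g j)).
move=> y nSy; have [j Fy] := hg y.
have [_ _ _ /(_ y Fy)] := hF (g j); case=> // Qy.
exact: (hQ _ _ _ Qy (fun z hz => hz j)).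
Qed.

Lemma odualD l1 l2 : odual abs iota M l1 -> odual abs iota M l2 ->
  odual abs iota M (fun x => l1 x + l2 x).
Proof.
move=> [a1 s1 c1] [a2 s2 c2]; split.
- by move=> x y; rewrite a1 a2 addrACA.
- by move=> a x; rewrite s1 s2 mulrDr.
- move=> x eps e0.
  have [U1 [o1 x1 h1]] := c1 x _ e0; have [U2 [o2 x2 h2]] := c2 x _ e0.
  exists (U1 `&` U2); split => //; first exact: (top_setI hT).
  by move=> y [y1 y2]; rewrite opprD addrACA; apply: abs_ultra_lt; [apply: h1 | apply: h2].
Qed.

Lemma odualZ s l : odual abs iota M l -> odual abs iota M (fun x => s * l x).
Proof.
move=> [a sc c]; split.
- by move=> x y; rewrite a mulrDr.
- by move=> b x; rewrite sc mulrCA.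
- move=> x eps e0.
  have e1 : 0 < eps / (abs s + 1) by rewrite divr_gt0 // ltr_wpDl // abs_ge0.
  have [U [oU Ux hU]] := c x _ e1; exists U; split => // y Uy.
  rewrite -mulrBr absM; apply: le_lt_trans (_ : abs s * (eps / (abs s + 1)) < eps).
    by rewrite ler_wpM2l ?abs_ge0 // ltW // hU.
  by rewrite mulrA ltr_pdivrMr ?ltr_wpDl ?abs_ge0 // mulrDr mulr1 [eps * _]mulrC ltrDl.
Qed.

Lemma odual_ball l a d : odual abs iota M l -> lt_open M [set x | abs (l x - a) < d].
Proof.
move=> [_ _ c]; apply: (open_nbhd hT) => x /= hx.
have [U [oU Ux hU]] := c x d (le_lt_trans (abs_ge0 _) hx).
exists U; split => // y Uy /=.
by rewrite -(subrK (l x) (l y)) -addrA; apply: abs_ultra_lt => //; apply: hU.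
Qed.

Lemma odual_bounded l : odual abs iota M l -> exists B, forall m, abs (l m) <= B.
Proof.
move=> [_ _ hl].
have [F hF] := choice (fun x => hl x 1 ltr01).
have hF1 x : lt_open M (F x) by case: (hF x).
have hF2 x : F x x by case: (hF x).
have [n [g hg]] := compact_cover hF1 hF2.
exists (\sum_(j < n) abs (l (g j)) + 1) => m.
have [j Fm] := hg m; have [_ _ /(_ m Fm) /ltW h1] := hF (g j).
have h2 : abs (l (g j)) <= \sum_(j < n) abs (l (g j)).
  by rewrite (bigD1 j) //= lerDl sumr_ge0 // => i _; exact: abs_ge0.
have s0 : 0 <= \sum_(j < n) abs (l (g j)) by rewrite sumr_ge0 // => i _; exact: abs_ge0.
rewrite -(subrK (l (g j)) (l m)); apply: abs_ultra_le.
  by apply: le_trans h1 _; rewrite lerDr.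
by apply: le_trans h2 _; rewrite lerDl.
Qed.

Lemma dnorm_le (l : M -> K) B : (forall m, abs (l m) <= B) -> dnorm abs M l <= B.
Proof.
move=> h; apply: ge_sup; first by exists (abs (l (lt_zero M))), (lt_zero M).
by move=> _ [m _ <-]; apply: h.
Qed.

Lemma dnorm_ge (l : M -> K) m : odual abs iota M l -> abs (l m) <= dnorm abs M l.
Proof.
move=> /odual_bounded [B hB]; apply: ub_le_sup; last by exists m.
by exists B => _ [y _ <-]; apply: hB.
Qed.

Lemma dclosure_vanish (S : set (M -> K)) l x :
  (forall l', S l' -> odual abs iota M l' /\ l' x = 0) ->
  dclosure abs iota M S l -> l x = 0.
Proof.
move=> hS [dl hcl]; apply: abs_eq0; apply/eqP; rewrite eq_le abs_ge0 andbT leNgt.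
apply/negP => hx; have [l' /hS [dl' l'x] hl'] := hcl _ hx.
have dd : odual abs iota M (fun m => l m - l' m).
  by apply: odualD => //; under eq_fun do rewrite -mulN1r; apply: odualZ.
have := dnorm_ge x dd; rewrite l'x subr0 => /le_lt_trans /(_ hl').
by rewrite ltxx.
Qed.

(** * Characters mod [o] *)

Record char_on (B U : set M) (c : M -> K) : Prop := {
  char_onD : forall x y, B x -> B y -> eqo (c (lt_add x y)) (c x + c y);
  char_onZ : forall a x, B x -> eqo (c (lt_scale a x)) (iota a * c x);
  char_on_int : forall u, B u -> U u -> eqo (c u) 0 }.

Definition char_mod_o (c : M -> K) := exists U, open_submod M U /\ char_on setT U c.

Lemma char_on0 (B U : set M) c : is_submodule B -> char_on B U c -> eqo (c (lt_zero M)) 0.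
Proof.
move=> sB cc; have := char_onZ cc 0 (submod0 sB).
by rewrite rmorph0 mul0r; lmodE hM; rewrite scale0r.
Qed.

Lemma char_onB (B U : set M) c x y : is_submodule B -> char_on B U c -> B x -> B y ->
  eqo (c (lt_add x (lt_opp y))) (c x - c y).
Proof.
move=> sB cc Bx By; have Bny := submodN hM sB By.
apply: (eqo_trans (char_onD cc Bx Bny)); apply: eqoD; first exact: eqo_refl.
have h := char_onD cc Bny By.
have e : lt_add (lt_opp y) y = lt_zero M by lmodE hM; rewrite addNr.
rewrite e in h; have := eqoB (eqo_trans (eqo_sym h) (char_on0 sB cc)) (eqo_refl (c y)).
by rewrite addrK sub0r.
Qed.

Lemma exists_min_ounifX (B U : set M) r : open_submod M U -> U `<=` B ->
  exists j, B (lt_scale (ounif ^+ j) r) /\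
            forall i, (i < j)%N -> ~ B (lt_scale (ounif ^+ i) r).
Proof.
move=> oU UB; have [k hk] := ounifX_scale_eventually r oU.
have exP : exists n, `[< B (lt_scale (ounif ^+ n) r) >] by exists k; apply/asboolP/UB/hk.
case: (ex_minnP exP) => j /asboolP Bj hmin; exists j; split => // i lt_ij Bi.
by have := hmin i (asboolT Bi); rewrite leqNgt lt_ij.
Qed.

(* If [pi^j r] is the first of the [pi^i r] to lie in [B], every [d] with
   [d r] in [B] is divisible by [pi^j]: otherwise [|d| > |pi|^j], and
   discreteness makes [pi^(j-1) / d] integral. *)
Lemma dvd_of_min_ounifX (B : set M) r j d : is_submodule B ->
  B (lt_scale (ounif ^+ j) r) -> (forall i, (i < j)%N -> ~ B (lt_scale (ounif ^+ i) r)) ->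
  B (lt_scale d r) -> exists s, d = s * ounif ^+ j.
Proof.
move=> sB Bj hmin Bd.
have [d0|dn0] := eqVneq (iota d) 0.
  by exists 0; rewrite mul0r; apply: iota_inj; rewrite d0 rmorph0.
have hle : abs (iota d) <= abs unif ^+ j.
  rewrite leNgt; apply/negP => hlt.
  case: j Bj hmin hlt => [|j] Bj hmin hlt.
    by move: hlt; rewrite expr0 ltNge abs_iota_le1.
  have h1 : abs (unif ^+ j.+1 / iota d) < 1.
    by rewrite absM absV absX ltr_pdivrMr ?abs_gt0 // mul1r.
  have h3 : abs (unif ^+ j / iota d) <= 1.
    rewrite -(ler_pM2r abs_unif_gt0) mul1r -absM mulrAC -exprSr.
    exact: abs_le_unif.
  have [t ht] := iota_onto h3.
  have e : t * d = ounif ^+ j by apply: iota_inj; rewrite rmorphM ht iota_ounifX mulfVK.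
  by apply: (hmin j (ltnSn j)); rewrite -e -(om_scaleA hM); apply: submodZ.
have h4 : abs (iota d / unif ^+ j) <= 1.
  by rewrite absM absV absX ler_pdivrMr ?mul1r // abs_unifX_gt0.
have [s hs] := iota_onto h4.
by exists s; apply: iota_inj; rewrite rmorphM hs iota_ounifX divfK ?unifX_neq0.
Qed.

Lemma char_adjoin_value (B U : set M) c r : is_submodule B -> open_submod M U -> U `<=` B ->
  char_on B U c -> exists v, forall d, B (lt_scale d r) -> eqo (c (lt_scale d r)) (iota d * v).
Proof.
move=> sB oU UB cc; have [j [Bj hmin]] := exists_min_ounifX r oU UB.
exists (c (lt_scale (ounif ^+ j) r) / unif ^+ j) => d Bd.
have [s ->] := dvd_of_min_ounifX sB Bj hmin Bd.
rewrite -(om_scaleA hM); apply: (eqo_trans (char_onZ cc s Bj)); apply: eqo_eq.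
by rewrite rmorphM iota_ounifX -mulrA [unif ^+ j * _]mulrC divfK ?unifX_neq0.
Qed.

Definition adjoin (B : set M) r : set M :=
  [set z | exists ba : M * o, B ba.1 /\ z = lt_add ba.1 (lt_scale ba.2 r)].

Lemma submod_adjoin B r : is_submodule B -> is_submodule (adjoin B r).
Proof.
move=> sB; split.
- exists (lt_zero M, 0); split; first exact: submod0.
  by lmodE hM; rewrite scale0r addr0.
- move=> x y [[b1 a1] /= [B1 ->]] [[b2 a2] /= [B2 ->]].
  exists (lt_add b1 b2, a1 + a2); split; first exact: submodD.
  by lmodE hM; rewrite scalerDl addrACA.
- move=> s x [[b a] /= [Bb ->]].
  exists (lt_scale s b, s * a); split; first exact: submodZ.
  by lmodE hM; rewrite scalerDr scalerA.
Qed.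

Lemma adjoin_l (B : set M) r : B `<=` adjoin B r.
Proof. by move=> b Bb; exists (b, 0); split => //; lmodE hM; rewrite scale0r addr0. Qed.

Lemma adjoin_r (B : set M) r : is_submodule B -> adjoin B r r.
Proof.
move=> sB; exists (lt_zero M, 1); split; first exact: submod0.
by lmodE hM; rewrite scale1r add0r.
Qed.

Definition char_adjoin (c : M -> K) (B : set M) r v : M -> K := fun z =>
  match pselect (adjoin B r z) with
  | left h => c (proj1_sig (cid h)).1 + iota (proj1_sig (cid h)).2 * v
  | right _ => 0 end.

Section Adjoin.
Variables (B U : set M) (c : M -> K) (r : M) (v : K).
Hypotheses (sB : is_submodule B) (cc : char_on B U c)
  (hv : forall d, B (lt_scale d r) -> eqo (c (lt_scale d r)) (iota d * v)).

Lemma char_adjoin_eqo b a z : B b -> z = lt_add b (lt_scale a r) ->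
  eqo (char_adjoin c B r v z) (c b + iota a * v).
Proof.
move=> Bb ez; rewrite /char_adjoin; case: pselect => [h|]; last by case; exists (b, a).
case: (cid h) => [[b' a'] /= [Bb' ez']].
have e : lt_scale (a - a') r = lt_add b' (lt_opp b).
  move: ez'; rewrite ez; lmodE hM => ez'.
  by rewrite scalerBl -[a *: _](addKr (b : Mz)) ez' addrA addrK addrC.
have Bd : B (lt_scale (a - a') r) by rewrite e; apply: submodB.
have hd := hv Bd; rewrite e in hd.
have := eqoD (eqo_trans (eqo_sym (char_onB sB cc Bb' Bb)) hd) (eqo_refl (c b + iota a' * v)).
by rewrite rmorphB; congr eqo; ring.
Qed.

Lemma char_on_adjoin : U `<=` B ->
  char_on (adjoin B r) U (char_adjoin c B r v) /\
  forall b, B b -> eqo (char_adjoin c B r v b) (c b).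
Proof.
move=> UB; split; last first.
  move=> b Bb; have := @char_adjoin_eqo b 0 b Bb.
  by rewrite rmorph0 mul0r addr0; apply; lmodE hM; rewrite scale0r addr0.
split.
- move=> x y [[b1 a1] /= [B1 ->]] [[b2 a2] /= [B2 ->]].
  have e : lt_add (lt_add b1 (lt_scale a1 r)) (lt_add b2 (lt_scale a2 r)) =
      lt_add (lt_add b1 b2) (lt_scale (a1 + a2) r) by lmodE hM; rewrite scalerDl addrACA.
  rewrite e; apply: (eqo_trans (char_adjoin_eqo (submodD sB B1 B2) erefl)).
  apply: eqo_trans (eqo_sym (eqoD (char_adjoin_eqo B1 erefl) (char_adjoin_eqo B2 erefl))).
  apply: (eqo_trans (eqoD (char_onD cc B1 B2) (eqo_refl (iota (a1 + a2) * v)))).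
  by apply: eqo_eq; rewrite rmorphD; ring.
- move=> s x [[b a] /= [Bb ->]].
  have e : lt_scale s (lt_add b (lt_scale a r)) = lt_add (lt_scale s b) (lt_scale (s * a) r).
    by lmodE hM; rewrite scalerDr scalerA.
  apply: (eqo_trans (char_adjoin_eqo (submodZ s sB Bb) e)).
  apply: eqo_trans (eqoMl (abs_iota_le1 s) (eqo_sym (char_adjoin_eqo Bb erefl))).
  apply: (eqo_trans (eqoD (char_onZ cc s Bb) (eqo_refl (iota (s * a) * v)))).
  by apply: eqo_eq; rewrite rmorphM; ring.
- move=> u _ Uu; have Bu := UB u Uu.
  have e : u = lt_add u (lt_scale 0 r) by lmodE hM; rewrite scale0r addr0.
  have := char_adjoin_eqo Bu e; rewrite rmorph0 mul0r addr0 => h.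
  exact: (eqo_trans h (char_on_int cc Bu Uu)).
Qed.
End Adjoin.

Definition char_sum (c : M -> K) (A U : set M) : M -> K := fun z =>
  match pselect (sum_set A U z) with
  | left h => c (proj1_sig (cid h)).1
  | right _ => 0 end.

Section Sum.
Variables (A U : set M) (c : M -> K).
Hypotheses (sA : is_submodule A) (sU : is_submodule U) (cc : char_on A U c).

Lemma char_sum_eqo a u z : A a -> U u -> z = lt_add a u -> eqo (char_sum c A U z) (c a).
Proof.
move=> Aa Uu ez; rewrite /char_sum; case: pselect => [h|]; last by case; exists (a, u).
case: (cid h) => [[a' u'] /= [Aa' Uu' ez']].
have e : lt_add a (lt_opp a') = lt_add u' (lt_opp u).
  move: ez'; rewrite ez; lmodE hM => ez'.
  have : ((a : Mz) - (a' : Mz)) + ((u : Mz) - (u' : Mz)) == 0.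
    by rewrite addrACA -opprD ez' subrr.
  by rewrite addr_eq0 opprB => /eqP.
have hA : A (lt_add a (lt_opp a')) by apply: submodB.
have hU : U (lt_add a (lt_opp a')) by rewrite e; apply: submodB.
have := eqoB (eqo_refl (c a))
  (eqo_trans (eqo_sym (char_onB sA cc Aa Aa')) (char_on_int cc hA hU)).
by rewrite subr0 opprB addrC subrK.
Qed.

Lemma char_on_sum : char_on (sum_set A U) U (char_sum c A U) /\
  forall a, A a -> eqo (char_sum c A U a) (c a).
Proof.
split; last first.
  move=> a Aa; apply: (char_sum_eqo Aa (submod0 sU)).
  by lmodE hM; rewrite addr0.
split.
- move=> x y [[a1 u1] /= [A1 U1 ->]] [[a2 u2] /= [A2 U2 ->]].
  have e : lt_add (lt_add a1 u1) (lt_add a2 u2) = lt_add (lt_add a1 a2) (lt_add u1 u2).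
    by lmodE hM; rewrite addrACA.
  apply: (eqo_trans (char_sum_eqo (submodD sA A1 A2) (submodD sU U1 U2) e)).
  apply: (eqo_trans (char_onD cc A1 A2)).
  exact: eqo_sym (eqoD (char_sum_eqo A1 U1 erefl) (char_sum_eqo A2 U2 erefl)).
- move=> s x [[a u] /= [Aa Uu ->]].
  have e : lt_scale s (lt_add a u) = lt_add (lt_scale s a) (lt_scale s u).
    by lmodE hM; rewrite scalerDr.
  apply: (eqo_trans (char_sum_eqo (submodZ s sA Aa) (submodZ s sU Uu) e)).
  apply: (eqo_trans (char_onZ cc s Aa)).
  exact: eqoMl (abs_iota_le1 s) (eqo_sym (char_sum_eqo Aa Uu erefl)).
- move=> u _ Uu.
  have e : u = lt_add (lt_zero M) u by lmodE hM; rewrite add0r.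
  exact: (eqo_trans (char_sum_eqo (submod0 sA) Uu e) (char_on0 sA cc)).
Qed.
End Sum.

Lemma char_extend_iter (A U : set M) c n (g : 'I_n -> M) :
  is_submodule A -> open_submod M U -> char_on A U c -> forall k, (k <= n)%N ->
  exists B c', [/\ is_submodule B, U `<=` B, char_on B U c',
    forall z, A z -> B z /\ eqo (c' z) (c z) &
    forall i : 'I_n, (i < k)%N -> B (g i)].
Proof.
move=> sA [oU sU] cc; elim => [|k ih] kn.
  have [cs es] := char_on_sum sA sU cc.
  exists (sum_set A U), (char_sum c A U); split => //.
  - exact: submod_sum.
  - exact: sum_set_r.
  - by move=> z Az; split; [exact: sum_set_l | exact: es].
have [B [c' [sB UB cc' hA hg]]] := ih (ltnW kn).
set r := g (Ordinal kn).
have [v hv] := char_adjoin_value r sB (conj oU sU) UB cc'.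
have [cc'' e''] := char_on_adjoin sB cc' hv UB.
exists (adjoin B r), (char_adjoin c' B r v); split => //.
- exact: submod_adjoin.
- by move=> u /UB; apply: adjoin_l.
- move=> z /hA [Bz ez]; split; first exact: adjoin_l.
  exact: eqo_trans (e'' z Bz) ez.
- move=> i; rewrite ltnS leq_eqVlt => /orP [/eqP ei|lt]; last by apply: adjoin_l; apply: hg.
  have -> : i = Ordinal kn by apply: val_inj.
  exact: adjoin_r.
Qed.

(* Finitely many cosets of [U] cover the compact [M], so adjoining finitely
   many elements to [A + U] exhausts [M]. *)
Lemma char_extend (A U : set M) c : is_submodule A -> open_submod M U -> char_on A U c ->
  exists c', char_on setT U c' /\ forall z, A z -> eqo (c' z) (c z).
Proof.
move=> sA oU cc.
have [n [g hg]] := compact_cover (fun x => open_coset x oU.1) (fun x => coset_self x oU.2).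
have [B [c' [sB UB cc' hA hgB]]] := char_extend_iter g sA oU cc (leqnn n).
have hB z : B z.
  have [j Fz] := hg z.
  have -> : z = lt_add (lt_add z (lt_opp (g j))) (g j) by lmodE hM; rewrite subrK.
  by apply: submodD => //; [apply: UB | apply: hgB].
exists c'; split; last by move=> z /hA [].
split=> [x y _ _|a x _|u _]; first exact: (char_onD cc' (hB x) (hB y)).
  exact: (char_onZ cc' a (hB x)).
exact: (char_on_int cc' (hB u)).
Qed.

(** * From characters to functionals *)

Lemma char_mod_oD c1 c2 : char_mod_o c1 -> char_mod_o c2 -> char_mod_o (fun x => c1 x + c2 x).
Proof.
move=> [U1 [oU1 cc1]] [U2 [oU2 cc2]]; exists (U1 `&` U2); split.
  by case: oU1 oU2 => ? ? [? ?]; split; [exact: (top_setI hT) | exact: submodI].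
split.
- by move=> x y _ _; rewrite addrACA; apply: eqoD; [apply: (char_onD cc1) | apply: (char_onD cc2)].
- by move=> a x _; rewrite mulrDr; apply: eqoD; [apply: (char_onZ cc1) | apply: (char_onZ cc2)].
- move=> u _ [U1u U2u]; rewrite -[0]addr0.
  by apply: eqoD; [apply: (char_on_int cc1) | apply: (char_on_int cc2)].
Qed.

Lemma char_mod_oZ s c : abs s <= 1 -> char_mod_o c -> char_mod_o (fun x => s * c x).
Proof.
move=> hs [U [oU cc]]; exists U; split => //; split.
- by move=> x y _ _; rewrite -mulrDr; apply: eqoMl => //; apply: (char_onD cc).
- by move=> a x _; rewrite mulrCA; apply: eqoMl => //; apply: (char_onZ cc).
- by move=> u _ Uu; rewrite -(mulr0 s); apply: eqoMl => //; apply: (char_on_int cc).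
Qed.

Lemma char_limit (e : nat -> M -> K) : (forall k, char_mod_o (e k)) ->
  (forall k x, eqo (unif * e k.+1 x) (e k x)) ->
  exists l, odual abs iota M l /\ forall k x, abs (l x - unif ^+ k * e k x) <= abs unif ^+ k.
Proof.
move=> ce he.
have hu x k : abs (unif ^+ k.+1 * e k.+1 x - unif ^+ k * e k x) <= abs unif ^+ k.
  by rewrite exprSr -mulrA -mulrBr; apply: abs_unifXM_le; apply: he.
have [l hl] := choice (fun x => unif_adic_limit (hu x)).
exists l; split => //.
have near_l x k (t : K) :
    abs t <= 1 -> abs (l x - unif ^+ k * e k x + unif ^+ k * t) <= abs unif ^+ k.
  by move=> ht; apply: abs_ultra_le; [apply: hl | apply: abs_unifXM_le].
split.
- move=> x y; apply: eq_of_abs_le_unifX => k; have [V [_ cc]] := ce k.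
  have := abs_ultraB_le (near_l (lt_add x y) k _ (char_onD cc (I : setT x) (I : setT y)))
    (abs_ultra_le (hl x k) (hl y k)).
  by congr (_ <= _); congr abs; ring.
- move=> a x; apply: eq_of_abs_le_unifX => k; have [V [_ cc]] := ce k.
  have := abs_ultraB_le (near_l (lt_scale a x) k _ (char_onZ cc a (I : setT x)))
    (abs_mul_le (hl x k) (abs_iota_le1 a)).
  by congr (_ <= _); congr abs; ring.
- move=> x eps e0; have [k hk] := exists_abs_unifX_lt e0; have [V [[oV sV] cc]] := ce k.
  exists [set y | V (lt_add y (lt_opp x))]; split; [exact: open_coset | exact: coset_self |].
  move=> y Vy; apply: le_lt_trans hk.
  have h := eqo_trans (eqo_sym (char_onB submodT cc (I : setT y) (I : setT x)))
    (char_on_int cc I Vy).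
  have := abs_ultraB_le (near_l y k _ (proj1 (eqo0 _) h)) (hl x k).
  by congr (_ <= _); congr abs; ring.
Qed.

Section DivideByUnif.
Variables (L V : set M) (c : M -> K).
Hypotheses (sL : is_submodule L) (oL : lt_open M (~` L))
  (satL : forall x, L (lt_scale ounif x) -> L x)
  (oV : open_submod M V) (cc : char_on setT V c) (cL : forall z, L z -> eqo (c z) 0).

Definition unif_sum := [set z | exists xy : M * M, L xy.2 /\ z = lt_add (lt_scale ounif xy.1) xy.2].

Definition char_div : M -> K := fun z =>
  match pselect (unif_sum z) with left h => c (proj1_sig (cid h)).1 | right _ => 0 end.

Lemma submod_unif_sum : is_submodule unif_sum.
Proof.
split.
- exists (lt_zero M, lt_zero M); split; first exact: submod0.
  by lmodE hM; rewrite scaler0 addr0.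
- move=> z1 z2 [[x1 y1] /= [L1 ->]] [[x2 y2] /= [L2 ->]].
  exists (lt_add x1 x2, lt_add y1 y2); split; first exact: submodD.
  by lmodE hM; rewrite scalerDr addrACA.
- move=> s z [[x y] /= [Ly ->]].
  exists (lt_scale s x, lt_scale s y); split; first exact: submodZ.
  by lmodE hM; rewrite scalerDr !scalerA mulrC.
Qed.

(* Well defined since [pi x + y = pi x' + y'] with [y, y'] in [L] forces
   [x - x'] into the saturated [L]. *)
Lemma char_div_eqo x y z : L y -> z = lt_add (lt_scale ounif x) y -> eqo (char_div z) (c x).
Proof.
move=> Ly ez; rewrite /char_div; case: pselect => [h|]; last by case; exists (x, y).
case: (cid h) => [[x' y'] /= [Ly' ez']].
have e : lt_scale ounif (lt_add x' (lt_opp x)) = lt_add y (lt_opp y').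
  move: ez'; rewrite ez; lmodE hM => ez'.
  have : ounif *: (x : Mz) + (y : Mz) - (ounif *: (x' : Mz) + (y' : Mz)) == 0 by rewrite ez' subrr.
  rewrite opprD addrACA -scalerBr addr_eq0 opprB => /eqP e.
  by rewrite -opprB scalerN e opprB.
have Lx : L (lt_add x' (lt_opp x)) by apply: satL; rewrite e; apply: submodB.
have := eqoB (eqo_refl (c x'))
  (eqo_trans (eqo_sym (char_onB submodT cc (I : setT x') (I : setT x))) (cL Lx)).
by rewrite subr0 opprB addrC subrK => /eqo_sym.
Qed.

(* Off [V + L], saturation puts [pi x] in the open complement of [L]; the
   tube lemma makes the resulting neighbourhoods uniform. *)
Lemma exists_open_submod_unif_sum : exists U, open_submod M U /\
  forall y l, L l -> U (lt_add (lt_scale ounif y) l) -> sum_set V L y.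
Proof.
pose Q y (U : set M) := forall l, L l -> ~ U (lt_add (lt_scale ounif y) l).
have oS : lt_open M (sum_set V L).
  apply: (open_of_add_stable oV) => s u [[v l] /= [Vv Ll ->]] Vu.
  exists (lt_add v u, l); split => //; first by apply: submodD => //; case: oV.
  by lmodE hM; rewrite addrAC.
have [U [oU hU]] : exists U, open_submod M U /\ forall y, ~ sum_set V L y -> Q y U.
  apply: (compact_tube hT oS) => [y U U1 hQ sub l Ll /sub|x nSx]; first exact: hQ.
  have nL : ~ L (lt_scale ounif x).
    move=> /satL Lx; apply: nSx; exists (lt_zero M, x); split => //.
      by apply: submod0; case: oV.
    by lmodE hM; rewrite add0r.
  have [Ux [[oUx sUx] hUx]] := open_submod_nbhd oL nL.
  exists [set y | Ux (lt_add (lt_scale ounif y) (lt_opp (lt_scale ounif x)))], Ux.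
  split => //.
  - exact: (open_scale_preimage ounif (open_coset (lt_scale ounif x) oUx)).
  - exact: coset_self.
  move=> y Wy l Ll Uyl; apply: (hUx (lt_add (lt_add (lt_scale ounif y) (lt_opp (lt_scale ounif x)))
                      (lt_opp (lt_add (lt_scale ounif y) l)))); first exact: submodB.
  have -> : lt_add (lt_scale ounif x) (lt_add (lt_add (lt_scale ounif y)
      (lt_opp (lt_scale ounif x))) (lt_opp (lt_add (lt_scale ounif y) l))) = lt_opp l.
    by lmodE hM; rewrite addrC addrAC addrNK opprD addNKr.
  exact: submodN.
exists U; split => // y l Ll Uyl; apply: contrapT => nS; exact: hU y nS l Ll Uyl.
Qed.

Lemma char_on_div : exists U, open_submod M U /\ char_on unif_sum U char_div.
Proof.
have [U [oU hU]] := exists_open_submod_unif_sum; exists U; split => //; split.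
- move=> z1 z2 [[x1 y1] /= [L1 ->]] [[x2 y2] /= [L2 ->]].
  have e : lt_add (lt_add (lt_scale ounif x1) y1) (lt_add (lt_scale ounif x2) y2) =
           lt_add (lt_scale ounif (lt_add x1 x2)) (lt_add y1 y2).
    by lmodE hM; rewrite scalerDr addrACA.
  rewrite e; apply: (eqo_trans (char_div_eqo (submodD sL L1 L2) erefl)).
  apply: (eqo_trans (char_onD cc I I)).
  exact: eqo_sym (eqoD (char_div_eqo L1 erefl) (char_div_eqo L2 erefl)).
- move=> s z [[x y] /= [Ly ->]].
  have e : lt_scale s (lt_add (lt_scale ounif x) y) =
           lt_add (lt_scale ounif (lt_scale s x)) (lt_scale s y).
    by lmodE hM; rewrite scalerDr !scalerA mulrC.
  rewrite e; apply: (eqo_trans (char_div_eqo (submodZ s sL Ly) erefl)).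
  apply: (eqo_trans (char_onZ cc s I)).
  exact: eqoMl (abs_iota_le1 s) (eqo_sym (char_div_eqo Ly erefl)).
- move=> z [[x y] /= [Ly ez]] Uz; rewrite ez in Uz.
  have [[v l] /= [Vv Ll ex]] := hU x y Ly Uz.
  apply: (eqo_trans (char_div_eqo Ly ez)); rewrite ex; apply: (eqo_trans (char_onD cc I I)).
  by rewrite -[0]addr0; apply: eqoD; [exact: (char_on_int cc (I : setT v) Vv) | exact: cL].
Qed.
End DivideByUnif.

(* Dividing a character that is integral on [L] by [pi]: define it on [pi M + L]
   by [pi x + l |-> c x] and extend. *)
Lemma char_mod_o_div (L : set M) c : is_submodule L -> lt_open M (~` L) ->
  (forall x, L (lt_scale ounif x) -> L x) -> char_mod_o c -> (forall z, L z -> eqo (c z) 0) ->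
  exists d, [/\ char_mod_o d, (forall z, L z -> eqo (d z) 0) & forall x, eqo (unif * d x) (c x)].
Proof.
move=> sL oL satL [V [oV cc]] cL.
have [U [oU ccd]] := char_on_div sL oL satL oV cc cL.
have [d [ccd' hd]] := char_extend (submod_unif_sum sL) oU ccd.
have Lsum z : L z -> unif_sum L z.
  by exists (lt_zero M, z); split => //; lmodE hM; rewrite scaler0 add0r.
have pisum x : unif_sum L (lt_scale ounif x).
  by exists (x, lt_zero M); split; [exact: submod0 | lmodE hM; rewrite addr0].
exists d; split; first by exists U.
- move=> z Lz; apply: (eqo_trans (hd z (Lsum z Lz))).
  apply: (eqo_trans (char_div_eqo sL satL cc cL (x := lt_zero M) Lz _)).
    by lmodE hM; rewrite scaler0 add0r.
  exact: (char_on0 submodT cc).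
- move=> x; have := char_onZ ccd' ounif (I : setT x); rewrite iota_ounif => /eqo_sym h.
  apply: (eqo_trans h); apply: (eqo_trans (hd _ (pisum x))).
  by apply: (char_div_eqo sL satL cc cL (submod0 sL)); lmodE hM; rewrite addr0.
Qed.

(* Repeated division by [pi] and a [pi]-adic limit turn a character into a
   functional congruent to it mod [o]. *)
Lemma char_lift c : is_hausdorff M -> is_torsionfree M -> char_mod_o c ->
  exists l, odual abs iota M l /\ forall x, eqo (l x) (c x).
Proof.
move=> hH htf cc.
have sat0 x : [set lt_zero M] (lt_scale ounif x) -> [set lt_zero M] x.
  by apply: htf; apply/eqP; exact: ounif_neq0.
have hstep d : exists d', char_mod_o d -> char_mod_o d' /\ forall x, eqo (unif * d' x) (d x).
  case: (pselect (char_mod_o d)) => [cd|]; last by exists d.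
  have [|d' [cd' _ hd']] := char_mod_o_div (submod_zero hM) (open_setC1 hT _ hH) sat0 cd.
    by move=> z ->; have [U [_ ccU]] := cd; exact: char_on0 submodT ccU.
  by exists d'.
have [next hnext] := choice hstep.
have ce k : char_mod_o (iter k next c) by elim: k => //= k ih; case: (hnext _ ih).
have [l [dl hl]] := char_limit ce (fun k => (hnext _ (ce k)).2).
by exists l; split => // x; have := hl 0%N x; rewrite expr0 mul1r.
Qed.

Section ExtendFunctional.
Variables (A : set M) (lam : M -> K).
Hypotheses (sA : is_submodule A) (oA : lt_open M (~` A))
  (satA : forall x, A (lt_scale ounif x) -> A x)
  (lamD : forall x y, A x -> A y -> lam (lt_add x y) = lam x + lam y)
  (lamZ : forall a x, A x -> lam (lt_scale a x) = iota a * lam x)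
  (lam_cont : forall k, exists U, open_submod M U /\
     forall z, A z -> U z -> abs (lam z) <= abs unif ^+ k).

Definition char_approx k (d : M -> K) :=
  char_mod_o d /\ forall z, A z -> eqo (d z) (lam z / unif ^+ k).

Lemma exists_char_approx k : exists d, char_approx k d.
Proof.
have [U [oU hU]] := lam_cont k.
have cc : char_on A U (fun z => lam z / unif ^+ k).
  split.
  - by move=> x y Ax Ay; apply: eqo_eq; rewrite lamD // mulrDl.
  - by move=> a x Ax; apply: eqo_eq; rewrite lamZ // mulrA.
  - move=> u Au Uu; rewrite eqo0 absM absV absX.
    by rewrite ler_pdivrMr ?mul1r ?abs_unifX_gt0 //; apply: hU.
have [d [ccd hd]] := char_extend sA oU cc.
by exists d; split => //; exists U.
Qed.

(* [d - pi e] is integral on [A] for approximations [d], [e] at levels [k]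
   and [k+1]; dividing it by [pi] corrects [e]. *)
Lemma char_approx_step k d : char_approx k d ->
  exists d', char_approx k.+1 d' /\ forall x, eqo (unif * d' x) (d x).
Proof.
move=> [cd dA]; have [e [ce eA]] := exists_char_approx k.+1.
have hpi : abs (- unif) <= 1 by rewrite absN ltW // abs_unif_lt1.
have cdelta := char_mod_oD cd (char_mod_oZ hpi ce).
have deltaA z : A z -> eqo (d z + - unif * e z) 0.
  move=> Az; apply: eqo_trans (eqoD (dA z Az) (eqoMl hpi (eA z Az))) _.
  by apply: eqo_eq; rewrite exprSr; field; rewrite unifX_neq0 (unifX_neq0 1).
have [d'' [cd'' d''A hd'']] := char_mod_o_div sA oA satA cdelta deltaA.
exists (fun x => e x + d'' x); split.
  split; first exact: char_mod_oD.
  by move=> z Az; rewrite -[_ / _]addr0; apply: eqoD; [apply: eA | apply: d''A].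
move=> x; have := eqoD (eqo_refl (unif * e x)) (hd'' x).
by rewrite mulrDr; congr eqo; ring.
Qed.

Lemma odual_extend : exists l, odual abs iota M l /\ forall z, A z -> l z = lam z.
Proof.
have hstep kd : exists d', char_approx kd.1 kd.2 ->
    char_approx kd.1.+1 d' /\ forall x, eqo (unif * d' x) (kd.2 x).
  case: (pselect (char_approx kd.1 kd.2)) => [/char_approx_step [d' hd']|]; last by exists kd.2.
  by exists d'.
have [next hnext] := choice hstep.
have [d0 hd0] := exists_char_approx 0.
pose e := fix e k := if k is k'.+1 then next (k', e k') else d0.
have ae k : char_approx k (e k) by elim: k => //= k ih; case: (hnext (k, e k) ih).
have [l [dl hl]] := char_limit (fun k => (ae k).1) (fun k => (hnext (k, e k) (ae k)).2).
exists l; split => // z Az; apply: eq_of_abs_le_unifX => k.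
have -> : l z - lam z = (l z - unif ^+ k * e k z) + unif ^+ k * (e k z - lam z / unif ^+ k).
  by rewrite mulrBr [unif ^+ k * (_ / _)]mulrC divfK ?unifX_neq0 //; ring.
by apply: abs_ultra_le; [exact: hl | apply: abs_unifXM_le; exact: (ae k).2].
Qed.
End ExtendFunctional.
End LinTopModule.

(** * Functionals on quotients *)

Lemma odual_comp (M N : ltmod o) (g : M -> N) (l : N -> K) :
  is_cont_olinear M N g -> odual abs iota N l -> odual abs iota M (l \o g).
Proof.
move=> hg [a s c]; split.
- by move=> x y /=; rewrite (col_add hg) a.
- by move=> b x /=; rewrite (col_scale hg) s.
- move=> x eps e0; have [U [oU Ux hU]] := c (g x) eps e0.
  by exists (g @^-1` U); split => //; [exact: (col_cont hg) | move=> y; apply: hU].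
Qed.

Section QuotientFunctional.
Variables (X : ltmod o) (hX : is_omodule X) (V : set X) (sV : is_submodule V) (lx : X -> K).
Hypotheses (lxD : forall x y, lx (lt_add x y) = lx x + lx y)
  (lxZ : forall a x, lx (lt_scale a x) = iota a * lx x)
  (lxV : forall x, V x -> lx x = 0).

Definition qdesc (S : quot V) : K := lx (qrepr S).

Lemma lxB x y : lx (lt_add x (lt_opp y)) = lx x - lx y.
Proof. by apply/eqP; rewrite eq_sym subr_eq -lxD; lmodE hX; rewrite subrK. Qed.

Lemma qdescE x : qdesc (qproj V x) = lx x.
Proof. by have := lxV (qreprP hX sV x); rewrite lxB => /eqP; rewrite subr_eq0 => /eqP. Qed.

Lemma qdescD S T : qdesc (lt_add S T) = qdesc S + qdesc T.
Proof. by rewrite -(qprojK S) -(qprojK T) (qprojD hX sV) !qdescE. Qed.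

Lemma qdescZ a S : qdesc (lt_scale a S) = iota a * qdesc S.
Proof. by rewrite -(qprojK S) (qprojZ hX sV) !qdescE. Qed.

Lemma open_qdesc_ball (a : K) d : lt_open X [set x | abs (lx x - a) < d] ->
  lt_open (quot V) [set S | abs (qdesc S - a) < d].
Proof.
move=> oB; rewrite /quot /=; congr (lt_open X _): oB.
by apply/seteqP; split => x /=; rewrite qdescE.
Qed.
End QuotientFunctional.

Section KernelQuotient.
Variables (X : ltmod o) (hX : is_omodule X) (lx : X -> K).
Hypotheses (lxD : forall x y, lx (lt_add x y) = lx x + lx y)
  (lxZ : forall a x, lx (lt_scale a x) = iota a * lx x)
  (lx_ball : forall a d, lt_open X [set x | abs (lx x - a) < d]).
Let W := [set x | lx x = 0].

Let lx0 : lx (lt_zero X) = 0.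
Proof.
apply: (@addrI _ (lx (lt_zero X))).
by rewrite addr0 -lxD; congr lx; lmodE hX; rewrite addr0.
Qed.

Lemma submod_ker_functional : is_submodule W.
Proof.
split; rewrite /W /=.
- exact: lx0.
- by move=> x y; rewrite lxD => -> ->; rewrite addr0.
- by move=> a x; rewrite lxZ => ->; rewrite mulr0.
Qed.

Lemma ker_quot_hausdorff : is_hausdorff (quot W).
Proof.
move=> S T nST; pose ld : quot W -> K := qdesc lx.
have sW := submod_ker_functional.
have ne : ld S != ld T.
  apply/negP => /eqP e; apply: nST; rewrite -(qprojK S) -(qprojK T); apply/(qprojP hX sW).
  by rewrite /W /= (lxB hX lxD); move: e; rewrite /ld /qdesc => ->; rewrite subrr.
have ball t : lt_open (quot W) [set S' | abs (ld S' - ld t) < abs (ld S - ld T)].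
  exact: (open_qdesc_ball hX sW lxD (fun _ h => h) (lx_ball _ _)).
exists [set S' | abs (ld S' - ld S) < abs (ld S - ld T)].
exists [set S' | abs (ld S' - ld T) < abs (ld S - ld T)].
have d0 : 0 < abs (ld S - ld T) by apply: abs_gt0; rewrite subr_eq0.
split; [exact: ball | exact: ball | by rewrite /= subrr abs0 | by rewrite /= subrr abs0 |].
apply/seteqP; split => // S' [h1 h2].
have : abs ((ld S' - ld T) - (ld S' - ld S)) < abs (ld S - ld T).
  by apply: abs_ultra_lt; rewrite ?absN.
have -> : ld S' - ld T - (ld S' - ld S) = ld S - ld T by ring.
by rewrite ltxx.
Qed.

Lemma ker_quot_torsionfree : is_torsionfree (quot W).
Proof.
move=> b S nb; rewrite -(qprojK S) (qprojZ hX submod_ker_functional) qproj0.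
move/(qprojP hX submod_ker_functional); rewrite /W /= (lxB hX lxD) lxZ.
rewrite lx0 subr0 => /eqP; rewrite mulf_eq0 => /orP [/eqP ib|/eqP lS].
  by case: nb; apply: iota_inj; rewrite ib rmorph0.
by apply/(qprojP hX submod_ker_functional); rewrite /W /= (lxB hX lxD) lS lx0 subrr.
Qed.

Lemma cot_sub_ker : cot_sub X `<=` W.
Proof.
by move=> x hx; apply: hx; [exact: submod_ker_functional | exact: ker_quot_hausdorff
  | exact: ker_quot_torsionfree].
Qed.
End KernelQuotient.

(** * The dual of a continuous linear map *)

Section Morphism.
Variables (M N : ltmod o) (hM : is_tf_compact_ltm abs iota M)
  (hN : is_tf_compact_ltm abs iota N) (f : M -> N) (hf : is_cont_olinear M N f).
Let hLM := tcl_ltm hM.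
Let hLN := tcl_ltm hN.
Let hMM := ltm_mod hLM.
Let hNN := ltm_mod hLN.
Let hTN := ltm_top hLN.

Lemma fB x y : f (lt_add x (lt_opp y)) = lt_add (f x) (lt_opp (f y)).
Proof.
have h : lt_add (f (lt_opp y)) (f y) = lt_zero N.
  by rewrite -(col_add hf) (om_addN hMM) (additive_zero hMM hNN hf).
have : (f (lt_opp y) : lmod_of hNN) + (f y : lmod_of hNN) == 0 by apply/eqP.
by rewrite (col_add hf) addr_eq0 => /eqP ->.
Qed.

Lemma submod_ker : is_submodule (kerP f).
Proof.
split; first exact: (additive_zero hMM hNN hf).
- by move=> x y; rewrite /kerP /= (col_add hf) => -> ->; lmodE hNN; rewrite addr0.
- by move=> a x; rewrite /kerP /= (col_scale hf) => ->; lmodE hNN; rewrite scaler0.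
Qed.

Lemma open_ker_compl : lt_open M (~` kerP f).
Proof. exact: (col_cont hf (open_setC1 hTN _ (tcl_hausdorff hN))). Qed.

Lemma ker_saturated x : kerP f (lt_scale ounif x) -> kerP f x.
Proof.
rewrite /kerP /= (col_scale hf); apply: (tcl_tf hN); apply/eqP; exact: ounif_neq0.
Qed.

Lemma submod_image : is_submodule [set n | exists m, f m = n].
Proof.
split; first by exists (lt_zero M); exact: (additive_zero hMM hNN hf).
- by move=> _ _ [m1 <-] [m2 <-]; exists (lt_add m1 m2); rewrite (col_add hf).
- by move=> a _ [m <-]; exists (lt_scale a m); rewrite (col_scale hf).
Qed.

(* Hausdorffness of [N] turns each [x] off [S] into a neighbourhood of [x]
   whose image misses an open submodule; compactness of [M] makes the
   submodule uniform. *)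
Lemma open_submod_avoiding (g : M -> N) (S : set M) :
  (forall W, lt_open N W -> lt_open M (g @^-1` W)) -> lt_open M S ->
  (forall x, ~ S x -> g x <> lt_zero N) ->
  exists U, open_submod N U /\ forall y, U (g y) -> S y.
Proof.
move=> cg oS hg.
have [U [oU hU]] : exists U, open_submod N U /\ forall y, ~ S y -> ~ U (g y).
  apply: (compact_tube (tcl_compact hM) hTN oS) => [y U U' hQ sub /sub //|x nSx].
  have [P [Q [oP oQ Px Q0 PQ]]] := tcl_hausdorff hN (hg x nSx).
  have [Ux [oUx hUx]] := open_submod_nbhd hLN oQ Q0.
  exists (g @^-1` P), Ux; split => //; first exact: cg.
  move=> y Py Uy; have Qy : Q (g y) by have := hUx _ Uy; lmodE hNN; rewrite add0r.
  by have : (P `&` Q) (g y) by []; rewrite PQ.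
by exists U; split => // y Uy; apply: contrapT => nS; exact: hU y nS Uy.
Qed.

Definition factor (g : M -> K) (n : N) : K :=
  match pselect (exists m, f m = n) with
  | left h => g (proj1_sig (cid h)) | right _ => 0 end.

Lemma factorE (g : M -> K) m :
  (forall x y, g (lt_add x (lt_opp y)) = g x - g y) -> (forall x, kerP f x -> g x = 0) ->
  factor g (f m) = g m.
Proof.
move=> gB gker; rewrite /factor; case: pselect => [h|]; last by case; exists m.
case: (cid h) => m' /= e; apply/eqP; rewrite -subr_eq0 -gB; apply/eqP/gker.
by rewrite /kerP /= fB e; lmodE hNN; rewrite subrr.
Qed.

(* [l / pi^k] factors through [f], and is integral on [f(M)] near [0]
   because [l] is small on the open set [V + ker f]. *)
Lemma exists_char_factor l k : odual abs iota M l -> (forall x, kerP f x -> l x = 0) ->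
  exists c : N -> K, char_mod_o c /\ forall m, eqo (c (f m)) (l m / unif ^+ k).
Proof.
move=> dl lker; have [_ _ lcont] := dl.
have [O [oO O0 hO]] := lcont (lt_zero M) _ (abs_unifX_gt0 k).
have [V [oV hV]] := open_submod_nbhd hLM oO O0.
have lV v : V v -> abs (l v) < abs unif ^+ k.
  move=> Vv; have := hO v; rewrite (odual0 hMM dl) subr0; apply.
  by have := hV v Vv; lmodE hMM; rewrite add0r.
have oS : lt_open M (sum_set V (kerP f)).
  apply: (open_of_add_stable hLM oV) => s u [[v w] /= [Vv kw ->]] Vu.
  exists (lt_add v u, w); split => //; first by apply: submodD => //; case: oV.
  by lmodE hMM; rewrite addrAC.
have [|U [oU hU]] := open_submod_avoiding (col_cont hf) oS.
  move=> x nSx fx; apply: nSx; exists (lt_zero M, x); split => //.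
    by apply: submod0; case: oV.
  by lmodE hMM; rewrite add0r.
pose g m := l m / unif ^+ k.
have gB x y : g (lt_add x (lt_opp y)) = g x - g y by rewrite /g (odualB hMM _ _ dl) mulrBl.
have gker x : kerP f x -> g x = 0 by move=> /lker; rewrite /g => ->; rewrite mul0r.
have cc : char_on [set n | exists m, f m = n] U (factor g).
  have [lD lZ _] := dl.
  split.
  - by move=> _ _ [m1 <-] [m2 <-]; rewrite -(col_add hf) !factorE // /g lD mulrDl; exact: eqo_refl.
  - by move=> a _ [m <-]; rewrite -(col_scale hf) !factorE // /g lZ mulrA; exact: eqo_refl.
  - move=> _ [m <-] /hU [[v w] /= [Vv kw ->]]; rewrite eqo0 factorE // /g lD (lker w kw) addr0.
    by rewrite absM absV absX ler_pdivrMr ?mul1r ?abs_unifX_gt0 // ltW // lV.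
have [c [cc' hc]] := char_extend hLN (tcl_compact hN) submod_image oU cc.
exists c; split; first by exists U.
by move=> m; rewrite -/(g m) -factorE //; apply: hc; exists m.
Qed.

Lemma odual_ker_approx l : odual abs iota M l -> (forall x, kerP f x -> l x = 0) ->
  forall eps, 0 < eps -> exists2 l0, odual abs iota N l0 &
    dnorm abs M (fun m => l m - l0 (f m)) < eps.
Proof.
move=> dl lker eps e0; have [k hk] := exists_abs_unifX_lt e0.
have [c [cc hc]] := exists_char_factor k dl lker.
have [l0 [dl0 hl0]] := char_lift hLN (tcl_compact hN) (tcl_hausdorff hN) (tcl_tf hN) cc.
exists (fun n => unif ^+ k * l0 n); first exact: odualZ.
apply: le_lt_trans hk; apply: dnorm_le => m.
have -> : l m - unif ^+ k * l0 (f m) = - unif ^+ k * (l0 (f m) - l m / unif ^+ k).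
  by field; exact: unifX_neq0.
by rewrite mulNr absN; apply: abs_unifXM_le; exact: eqo_trans (hl0 _) (hc m).
Qed.

Lemma open_submod_off_image n0 : ~ (exists m, f m = n0) ->
  exists U, open_submod N U /\ forall m, ~ U (lt_add (lt_opp n0) (f m)).
Proof.
move=> nex.
have [|||U [oU hU]] := @open_submod_avoiding (fun m => lt_add (lt_opp n0) (f m)) set0.
- by move=> W oW; exact: (col_cont hf (open_transl hLN (lt_opp n0) oW)).
- exact: (top_set0 (ltm_top hLM)).
- move=> x _ e; apply: nex; exists x.
  have : - (n0 : lmod_of hNN) + f x == 0 by apply/eqP.
  by rewrite addrC subr_eq0 => /eqP.
by exists U; split => // m /hU.
Qed.

(* Put [B = f(M) + U] and let [pi^j n0] be the first multiple of [n0] in [B];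
   then [j > 0], and the character [0] on [B] extends to [B + o n0] with value
   [pi^-j] at [n0]. *)
Lemma exists_char_separating n0 : ~ (exists m, f m = n0) ->
  exists c : N -> K, [/\ char_mod_o c, forall m, eqo (c (f m)) 0 & 1 < abs (c n0)].
Proof.
move=> nex; have [U [oU hU]] := open_submod_off_image nex.
pose B := sum_set [set n | exists m, f m = n] U.
have sB : is_submodule B := submod_sum hNN submod_image (proj2 oU).
have UB : U `<=` B := sum_set_r hNN submod_image.
have [j [Bj hmin]] := exists_min_ounifX hLN n0 oU UB.
have j0 : (0 < j)%N.
  rewrite lt0n; apply/eqP => ej; move: Bj; rewrite ej expr0 (om_scale1 hNN).
  move=> [[_ u] /= [[m <-] Uu e]]; apply: (hU m).
  have -> : lt_add (lt_opp n0) (f m) = lt_opp u.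
    by rewrite e; lmodE hNN; rewrite opprD addrAC addNr add0r.
  exact: (submodN hNN (proj2 oU) Uu).
have c0 : char_on B U (fun _ => 0).
  by split => *; apply: eqo_eq; rewrite ?addr0 ?mulr0.
pose v := (unif ^+ j)^-1.
have hv d : B (lt_scale d n0) -> eqo 0 (iota d * v).
  move=> /(dvd_of_min_ounifX hLN sB Bj hmin) [s ->].
  rewrite rmorphM iota_ounifX /v mulfK ?unifX_neq0 //.
  by apply/eqo_sym/eqo0; exact: abs_iota_le1.
have [cc1 c1B] := char_on_adjoin hLN sB c0 hv UB.
have c1n0 : eqo (char_adjoin (fun _ => 0) B n0 v n0) v.
  have := char_adjoin_eqo hLN sB c0 hv (b := lt_zero N) (a := 1) (submod0 sB).
  by rewrite rmorph1 mul1r add0r; apply; lmodE hNN; rewrite scale1r add0r.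
have [c [cc hc]] := char_extend hLN (tcl_compact hN) (submod_adjoin hLN n0 sB) oU cc1.
exists c; split; first by exists U.
- move=> m; have Bfm : B (f m) by apply: (sum_set_l hNN (proj2 oU)); exists m.
  exact: eqo_trans (hc _ (adjoin_l hLN n0 Bfm)) (c1B _ Bfm).
- apply: eqo_abs_gt1 (eqo_trans (hc _ (adjoin_r hLN n0 sB)) c1n0) _.
  by rewrite /v absV absX invf_gt1 ?abs_unifX_gt0 // exprn_ilt1 ?abs_ge0 ?abs_unif_lt1 // -lt0n.
Qed.

Lemma surj_of_dnorm_comp :
  (forall l, odual abs iota N l -> dnorm abs M (l \o f) = dnorm abs N l) ->
  forall n, exists m, f m = n.
Proof.
move=> iso n; apply: contrapT => nex.
have [c [cc cf cn]] := exists_char_separating nex.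
have [l [dl hl]] := char_lift hLN (tcl_compact hN) (tcl_hausdorff hN) (tcl_tf hN) cc.
have : dnorm abs M (l \o f) <= 1.
  by apply: dnorm_le => m; rewrite -eqo0; exact: eqo_trans (hl _) (cf m).
rewrite iso // => /(le_trans (dnorm_ge (tcl_compact hN) n dl)).
by rewrite leNgt (eqo_abs_gt1 (hl n) cn).
Qed.

Let sV : is_submodule [set n | exists m, f m = n] := submod_image.
Let hCok : is_omodule (coker f) := quot_omodule hNN sV.
Let sW : is_submodule (cot_sub (coker f)) := submod_cot_sub (coker f).
Local Notation C := (cot (coker f)).
Local Notation q := (coker_cot_proj f).

Lemma cont_olinear_coker_cot_proj : is_cont_olinear N C q.
Proof.
split => [x y|a x|//].
- by rewrite /coker_cot_proj /qmap -(qprojD hNN sV) -(qprojD hCok sW).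
- by rewrite /coker_cot_proj /qmap -(qprojZ hNN sV) -(qprojZ hCok sW).
Qed.

Lemma coker_cot_proj_image m : q (f m) = lt_zero C.
Proof.
rewrite /coker_cot_proj /qmap (qproj0 (cot_sub (coker f))) /coker.
rewrite (qproj0 [set n | exists m, f m = n]).
congr qproj; apply/(qprojP hNN sV); exists m; lmodE hNN; by rewrite subr0.
Qed.

Lemma coker_cot_proj_surj (c : C) : c = q (qrepr (qrepr c)).
Proof. by rewrite /coker_cot_proj /qmap !qprojK. Qed.

Lemma odual_coker_cot_comp lam : odual abs iota C lam ->
  odual abs iota N (lam \o q) /\ forall m, lam (q (f m)) = 0.
Proof.
move=> dl; split; first exact: odual_comp cont_olinear_coker_cot_proj dl.
by move=> m; rewrite coker_cot_proj_image (odual0 (quot_omodule hCok sW) dl).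
Qed.

Lemma odual_descend_coker_cot l : odual abs iota N l -> (forall m, l (f m) = 0) ->
  exists2 lam : C -> K, odual abs iota C lam & forall n, l n = lam (q n).
Proof.
move=> dl lf; have [lD lZ _] := dl.
have lV n : [set n | exists m, f m = n] n -> l n = 0 by case=> m <-.
pose lc : coker f -> K := qdesc l.
have lcD := qdescD hNN sV lD lV; have lcZ := qdescZ hNN sV lD lZ lV.
have lc_ball a d : lt_open (coker f) [set x | abs (lc x - a) < d].
  exact: (open_qdesc_ball hNN sV lD lV (odual_ball hLN a d dl)).
have lcW := cot_sub_ker hCok lcD lcZ lc_ball.
pose lam : C -> K := qdesc lc.
have lamE n : lam (q n) = l n.
  by rewrite /lam (qdescE hCok sW lcD lcW) (qdescE hNN sV lD lV).
exists lam => [|n]; last by rewrite lamE.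
split; [exact: (qdescD hCok sW lcD lcW) | exact: (qdescZ hCok sW lcD lcZ lcW) |].
move=> S eps e0; exists [set S' | abs (lam S' - lam S) < eps]; split.
- exact: (open_qdesc_ball hCok sW lcD lcW (lc_ball _ _)).
- by rewrite /= subrr abs0.
- by [].
Qed.

Local Notation Kf := (kerltmod hMM hNN hf).

Lemma kerltmod_valD (x y : Kf) : proj1_sig (lt_add x y) = lt_add (proj1_sig x) (proj1_sig y).
Proof.
rewrite /= /sub_add; case: pselect => // [[]].
exact: (submodD submod_ker (proj2_sig x) (proj2_sig y)).
Qed.

Lemma kerltmod_valZ a (x : Kf) : proj1_sig (lt_scale a x) = lt_scale a (proj1_sig x).
Proof.
rewrite /= /sub_scale; case: pselect => // [[]].
exact: (submodZ a submod_ker (proj2_sig x)).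
Qed.

Lemma odual_restrict_ker l : odual abs iota M l -> odual abs iota Kf (fun x => l (proj1_sig x)).
Proof.
case=> lD lZ lc; split => [x y|b x|x eps e0]; first by rewrite kerltmod_valD lD.
  by rewrite kerltmod_valZ lZ.
have [U [oU Ux hU]] := lc (proj1_sig x) eps e0.
by exists [set z : Kf | U (proj1_sig z)]; split => //; [exists U | move=> y; apply: hU].
Qed.

Definition ker_extend (lam : Kf -> K) (z : M) : K :=
  match pselect (kerP f z) with left h => lam (exist _ z h) | right _ => 0 end.

Lemma ker_extendE lam z (h : kerP f z) : ker_extend lam z = lam (exist _ z h).
Proof. by rewrite /ker_extend; case: pselect => // h'; congr lam; apply: eq_exist. Qed.

Lemma odual_extend_from_ker lam : odual abs iota Kf lam ->
  exists2 l, odual abs iota M l & forall x, lam x = l (proj1_sig x).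
Proof.
move=> dl; have [lD lZ lc] := dl.
have sig_eq (x y : Kf) : proj1_sig x = proj1_sig y -> x = y.
  by case: x y => [x ?] [y ?] /= e; apply: eq_exist.
have lam0 : lam (lt_zero Kf) = 0.
  apply: (@addrI _ (lam (lt_zero Kf))); rewrite addr0 -lD; congr lam.
  by apply: sig_eq; rewrite kerltmod_valD /=; lmodE hMM; rewrite addr0.
have [|||l [dlM hl]] := odual_extend hLM (tcl_compact hM) submod_ker open_ker_compl
  ker_saturated (lam := ker_extend lam).
- move=> x y hx hy; rewrite (ker_extendE lam (submodD submod_ker hx hy)).
  rewrite (ker_extendE lam hx) (ker_extendE lam hy) -lD; congr lam.
  by apply: sig_eq; rewrite kerltmod_valD.
- move=> a x hx; rewrite (ker_extendE lam (submodZ a submod_ker hx)) (ker_extendE lam hx) -lZ.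
  by congr lam; apply: sig_eq; rewrite kerltmod_valZ.
- move=> k; have [W [[O oO ->] /= O0 hW]] := lc (lt_zero Kf) _ (abs_unifX_gt0 k).
  have [U [oU hU]] := open_submod_nbhd hLM oO O0.
  exists U; split => // z hz Uz; rewrite (ker_extendE lam hz).
  have := hW (exist _ z hz); rewrite lam0 subr0 => /(_ _)/ltW; apply.
  by have := hU z Uz; lmodE hMM; rewrite add0r.
by exists l => // [[x hx]] /=; rewrite (hl x hx) (ker_extendE lam hx).
Qed.

Lemma restrict_ker_eq0P l : odual abs iota M l ->
  ((forall x : Kf, l (proj1_sig x) = 0) <->
   dclosure abs iota M [set l0 \o f | l0 in odual abs iota N] l).
Proof.
move=> dl; split => [lker|hcl x].
  split => // eps e0.
  have [l0 dl0 hl0] := odual_ker_approx dl (fun x hx => lker (exist _ x hx)) e0.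
  by exists (l0 \o f) => //; exists l0.
apply: (dclosure_vanish hLM (tcl_compact hM) _ hcl) => _ [l0 dl0 <-].
by split; [exact: odual_comp | rewrite /= (proj2_sig x) (odual0 hNN dl0)].
Qed.

Lemma surj_iff_dnorm_comp : (forall n, exists m, f m = n) <->
  (forall l, odual abs iota N l -> dnorm abs M (l \o f) = dnorm abs N l).
Proof.
split=> [hs l _|]; last exact: surj_of_dnorm_comp.
rewrite /dnorm; congr sup; apply/seteqP; split => _ [x _ <-]; first by exists (f x).
by have [m <-] := hs x; exists m.
Qed.
End Morphism.
End PAdic.

Unset Implicit Arguments. Set Strict Implicit.
Theorem proposition1p3 (p : nat) (K : fieldType) (R : realType)
    (abs : K -> R) (hK : is_padic_field p abs)
    (o : comNzRingType) (iota : {rmorphism o -> K})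
    (ho : is_ring_of_integers abs iota)
    (M N : ltmod o)
    (hM : is_tf_compact_ltm abs iota M) (hN : is_tf_compact_ltm abs iota N)
    (f : M -> N) (hf : is_cont_olinear M N f) :
  let Md := odual abs iota M in
  let Nd := odual abs iota N in
  let fd := fun l : N -> K => l \o f in
  (* (i) ker(f)^d = M^d / closure(f^d(N^d)) via restriction *)
  (let Kf := kerltmod (ltm_mod (tcl_ltm hM)) (ltm_mod (tcl_ltm hN)) hf in
   let res := fun (l : M -> K) (x : Kf) => l (proj1_sig x) in
   (forall l, Md l -> odual abs iota Kf (res l)) /\
   (forall lam : Kf -> K, odual abs iota Kf lam ->
      exists2 l, Md l & forall x, lam x = res l x) /\
   (forall l, Md l ->
      ((forall x : Kf, res l x = 0) <->
       dclosure abs iota M [set fd l0 | l0 in Nd] l))) /\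
  (* (ii) [coker(f)_cot]^d = ker(f^d) via the dual of N -> coker(f)_cot *)
  (let C := cot (coker f) in
   let q : N -> C := coker_cot_proj f in
   (forall lam : C -> K, odual abs iota C lam ->
      Nd (lam \o q) /\ forall m, fd (lam \o q) m = 0) /\
   (forall lam1 lam2 : C -> K, odual abs iota C lam1 -> odual abs iota C lam2 ->
      (forall n, lam1 (q n) = lam2 (q n)) -> forall c, lam1 c = lam2 c) /\
   (forall l, Nd l -> (forall m, fd l m = 0) ->
      exists2 lam : C -> K, odual abs iota C lam & forall n, l n = lam (q n))) /\
  (* (iii) f surjective <-> f^d isometry *)
  ((forall n : N, exists m : M, f m = n) <->
   (forall l, Nd l -> dnorm abs M (fd l) = dnorm abs N l)).
Proof.
move=> Md Nd fd; split; [|split].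
- split; [|split].
  + move=> l dl; exact: (odual_restrict_ker hM hN hf dl).
  + move=> lam dl; exact: (odual_extend_from_ker hK ho dl).
  + move=> l dl; exact: (restrict_ker_eq0P hK ho hM hN hf dl).
- split; [|split].
  + move=> lam dl; exact: (odual_coker_cot_comp hM hN hf dl).
  + by move=> lam1 lam2 _ _ h c; rewrite (coker_cot_proj_surj c).
  + move=> l dl lf; exact: (odual_descend_coker_cot hK ho hM hN hf dl lf).
- exact: (surj_iff_dnorm_comp hK ho hM hN hf).
Qed.
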